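(* Assume $f_1$ is $C^3$ and $f_2$ is $C^2$, that $\frac{D}{\gamma_2\lambda_Z(D)}>f_2'(\lambda_Z(D))$, and let $\mu_{c_2}>\mu_{c_1}(D,D)$ be a zero of $A$. Then there exist $\delta>0$ and $\rho>0$ such that for every $(D_1,D_2)$ with $D_1,D_2>0$ and $\|(D_1,D_2)-(D,D)\|<\rho$ the following hold for all $\mu\in[\mu_{c_2}-\delta,\mu_{c_2}+\delta]$ (all of which satisfy $\mu>\mu_{c_1}(D_1,D_2)$): (1) the Jacobian of $( * )$ at $E_2(\mu,D_1,D_2)$ has one negative real eigenvalue and a pair of nonreal complex conjugate eigenvalues $a(\mu)\pm i\omega(\mu)$, $\omega(\mu)\ne0$; (2) if, in addition, $f_1''(N(\mu_{c_2},D,D))<0$, then (after possibly shrinking $\delta$ and $\rho$) $a(\mu)$ is differentiable in $\mu$, $a'(\mu)>0$ on $[\mu_{c_2}-\delta,\mu_{c_2}+\delta]$, and there is $\mu^*=\mu^*(D_1,D_2)\in(\mu_{c_2}-\delta,\mu_{c_2}+\delta)$ with $a(\mu^* )=0$; in particular at $\mu^*$ the Jacobian has a pair of nonzero purely imaginary eigenvalues crossing the imaginary axis with $a'(\mu^* )>0$, while its third eigenvalue is negative.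
   Context: Let $D,\gamma_1,\gamma_2>0$ and $f_1,f_2:[0,\infty)\to[0,\infty)$ bounded, continuously differentiable, $f_i(0)=0$, $f_i'>0$, with $\lim f_1>d/\gamma_1$, $\lim f_2>d/\gamma_2$ for all $d$ in a neighborhood of $D$. The system $( * )$ is $N'=(\mu-N)D-Pf_1(N)$, $P'=\gamma_1Pf_1(N)-D_1P-Zf_2(P)$, $Z'=\gamma_2Zf_2(P)-D_2Z$ with $D_1,D_2>0$ and parameter $\mu>0$. $\lambda_P(d),\lambda_Z(d)$ are defined by $f_1(\lambda_P(d))=d/\gamma_1$, $f_2(\lambda_Z(d))=d/\gamma_2$; $\mu_{c_1}(D_1,D_2)=\lambda_P(D_1)+D_1\lambda_Z(D_2)/(D\gamma_1)$. For $\mu>\mu_{c_1}(D_1,D_2)$, $N(\mu,D_1,D_2)$ is the unique $N\in(0,\mu)$ with $(\mu-N)D-\lambda_Z(D_2)f_1(N)=0$, $Z(\mu,D_1,D_2)=(\gamma_2/D_2)\lambda_Z(D_2)(\gamma_1f_1(N)-D_1)$, and $E_2(\mu,D_1,D_2)=(N,\lambda_Z(D_2),Z)$ is the coexistence equilibrium. For $\mu>\mu_{c_1}(D,D)$, $A(\mu)=Z(\mu,D,D)\bigl(\frac{D}{\gamma_2\lambda_Z(D)}-f_2'(\lambda_Z(D))\bigr)-\lambda_Z(D)f_1'(N(\mu,D,D))$ (twice the real part of the complex eigenvalue pair of the Jacobian at $E_2(\mu,D,D)$). *)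

From Stdlib Require Import Reals ClassicalEpsilon.
Open Scope R_scope.

(* lambda(d) for f, gamma: the point x >= 0 with f x = d / gamma
   (unique when f is strictly increasing on [0,oo); default 0 otherwise). *)
Definition lam (f : R -> R) (g d : R) : R :=
  epsilon (inhabits 0) (fun x => 0 <= x /\ f x = d / g).

Definition mu_c1 (f1 f2 : R -> R) (g1 g2 D D1 D2 : R) : R :=
  lam f1 g1 D1 + D1 * lam f2 g2 D2 / (D * g1).

(* N(mu,D1,D2): the unique N in (0,mu) with (mu-N)D - lambda_Z(D2) f1(N) = 0
   (it does not depend on D1). *)
Definition Nstar (f1 f2 : R -> R) (g2 D mu D2 : R) : R :=
  epsilon (inhabits 0)
    (fun N => 0 < N < mu /\ (mu - N) * D - lam f2 g2 D2 * f1 N = 0).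

Definition Zstar (f1 f2 : R -> R) (g1 g2 D mu D1 D2 : R) : R :=
  (g2 / D2) * lam f2 g2 D2 * (g1 * f1 (Nstar f1 f2 g2 D mu D2) - D1).

(* Jacobian of the system ( * ) at the point (N,P,Z), entries indexed 0..2;
   f1', f2' are the derivatives of f1, f2. *)
Definition jac (f1 f1' f2 f2' : R -> R) (g1 g2 D D1 D2 N P Z : R)
  (i j : nat) : R :=
  match i, j with
  | 0%nat, 0%nat => - D - P * f1' N
  | 0%nat, 1%nat => - f1 N
  | 0%nat, 2%nat => 0
  | 1%nat, 0%nat => g1 * P * f1' N
  | 1%nat, 1%nat => g1 * f1 N - D1 - Z * f2' P
  | 1%nat, 2%nat => - f2 P
  | 2%nat, 0%nat => 0
  | 2%nat, 1%nat => g2 * Z * f2' P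
  | 2%nat, 2%nat => g2 * f2 P - D2
  | _, _ => 0
  end.

Definition jacE2 (f1 f1' f2 f2' : R -> R) (g1 g2 D mu D1 D2 : R) :
  nat -> nat -> R :=
  jac f1 f1' f2 f2' g1 g2 D D1 D2
      (Nstar f1 f2 g2 D mu D2) (lam f2 g2 D2) (Zstar f1 f2 g1 g2 D mu D1 D2).

Definition det3 (M : nat -> nat -> R) : R :=
  M 0%nat 0%nat * (M 1%nat 1%nat * M 2%nat 2%nat - M 1%nat 2%nat * M 2%nat 1%nat)
  - M 0%nat 1%nat * (M 1%nat 0%nat * M 2%nat 2%nat - M 1%nat 2%nat * M 2%nat 0%nat)
  + M 0%nat 2%nat * (M 1%nat 0%nat * M 2%nat 1%nat - M 1%nat 1%nat * M 2%nat 0%nat).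

Definition charpoly (J : nat -> nat -> R) (x : R) : R :=
  det3 (fun i j => (if Nat.eqb i j then x else 0) - J i j).

(* The eigenvalues of J (with multiplicity) are r, a + i w, a - i w:
   det(xI - J) = (x - r)((x - a)^2 + w^2) as polynomials. *)
Definition eig_split (J : nat -> nat -> R) (r a w : R) : Prop :=
  forall x, charpoly J x = (x - r) * ((x - a) ^ 2 + w ^ 2).

Definition Afun (f1 f1' f2 f2' : R -> R) (g1 g2 D mu : R) : R :=
  Zstar f1 f2 g1 g2 D mu D D * (D / (g2 * lam f2 g2 D) - f2' (lam f2 g2 D))
  - lam f2 g2 D * f1' (Nstar f1 f2 g2 D mu D).

Definition response_ok (f f' : R -> R) (g D : R) : Prop :=
  f 0 = 0 /\
  (forall x, 0 <= x -> 0 <= f x) /\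
  (exists B, forall x, 0 <= x -> f x <= B) /\
  (forall x, derivable_pt_lim f x (f' x)) /\ continuity f' /\
  (forall x, 0 <= x -> 0 < f' x) /\
  (exists L, (forall eps, 0 < eps -> exists M, forall x, M <= x -> Rabs (f x - L) < eps)
             /\ exists eta, 0 < eta /\ forall d, Rabs (d - D) < eta -> d / g < L).

(* Property (1) for fixed (D1,D2) on [mu_c2 - delta, mu_c2 + delta];
   r, a, w give the eigenvalues r, a(mu) +- i w(mu). *)
Definition prop1 (f1 f1' f2 f2' : R -> R) (g1 g2 D D1 D2 muc2 delta : R)
  (r a w : R -> R) : Prop :=
  forall mu, muc2 - delta <= mu <= muc2 + delta ->
    mu > mu_c1 f1 f2 g1 g2 D D1 D2 /\
    eig_split (jacE2 f1 f1' f2 f2' g1 g2 D mu D1 D2) (r mu) (a mu) (w mu) /\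
    r mu < 0 /\ w mu <> 0.

(* The characteristic polynomial of the Jacobian at E2(mu, D1, D2) is a monic cubic
   x^3 + k2 x^2 + k1 x + k0.  Its coefficients are biaffine in f1(N), f1'(N), where
   N = N(mu, D2) is an implicit function of mu, so they are continuous in (mu, D1, D2)
   and differentiable in mu.  When D1 = D2 = D, mass balance makes -D an eigenvalue for
   every mu, and A(mu_c2) = 0 says exactly that k2 = D at mu_c2, so there the cubic is
   (x + D)(x^2 + k1) with k1 > 0.  The simple root -D persists as a real root r(mu, D1, D2)
   on a box around (mu_c2, D, D), continuous and, by implicit differentiation,
   differentiable in mu; the remaining roots are a +- i w with a = -(k2 + r)/2, w > 0:
   this is part (1).  For part (2), f1''(N) < 0 makes da/dmu = -(dk2/dmu)/2 > 0 at
   (mu_c2, D, D) (there r = -D identically); hence da/dmu > 0 on a smaller box, a changes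
   sign across mu_c2 at (D, D) and by continuity at nearby (D1, D2), and the intermediate
   value theorem yields mu*. *)

From Stdlib Require Import Reals Ranalysis5 Lra Psatz ClassicalEpsilon FunctionalExtensionality.
From Coquelicot Require Import Coquelicot.
Open Scope R_scope.

Lemma ball_R (x e y : R) : ball x e y <-> Rabs (y - x) < e.
Proof.
  unfold ball; simpl; unfold AbsRing_ball, abs, minus, plus, opp; simpl. tauto.
Qed.

Lemma ball_pair {U V : UniformSpace} (p : U) (q : V) e p' q' :
  ball (p, q) e (p', q') <-> ball p e p' /\ ball q e q'.
Proof. unfold ball at 1; simpl; unfold prod_ball; simpl. tauto. Qed.

Lemma locally_R (x d : R) (P : R -> Prop) : 0 < d ->
  (forall y, Rabs (y - x) < d -> P y) -> locally x P.
Proof. intros Hd HP. exists (mkposreal d Hd). intros y Hy. apply HP, ball_R, Hy. Qed.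

Lemma locally3 (x y z d : R) (P : R * R * R -> Prop) : 0 < d ->
  (forall a b c, Rabs (a - x) < d -> Rabs (b - y) < d -> Rabs (c - z) < d -> P (a, b, c)) ->
  locally (x, y, z) P.
Proof.
  intros Hd HP. exists (mkposreal d Hd). intros [[a b] c] Hb.
  rewrite !ball_pair, !ball_R in Hb. apply HP; tauto.
Qed.

Lemma locally3_cube (x y z : R) (P : R * R * R -> Prop) : locally (x, y, z) P ->
  exists d, 0 < d /\
  forall a b c, Rabs (a - x) < d -> Rabs (b - y) < d -> Rabs (c - z) < d -> P (a, b, c).
Proof.
  intros [d Hd]. exists d. split; [apply cond_pos|]. intros a b c Ha Hb Hc.
  apply Hd. rewrite !ball_pair, !ball_R. tauto.
Qed.

Lemma locally3_slice (x y z : R) (P : R * R * R -> Prop) :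
  locally (x, y, z) P -> locally x (fun t => P (t, y, z)).
Proof.
  intros [e He]. exists e. intros t Ht. apply He.
  rewrite !ball_pair. repeat split; auto; apply ball_center.
Qed.

Lemma continuous_near {U : UniformSpace} (f : U -> R) x : continuous f x ->
  forall eps : posreal, locally x (fun y => Rabs (f y - f x) < eps).
Proof.
  intros H eps. eapply filter_imp; [|exact (proj1 (filterlim_locally f (f x)) H eps)].
  intros y Hy. apply ball_R in Hy. exact Hy.
Qed.

Lemma continuity_pt_of (f : R -> R) x : continuous f x -> continuity_pt f x.
Proof. apply continuity_pt_filterlim. Qed.

Lemma continuity_pt_eps (f : R -> R) x : continuity_pt f x ->
  forall eps, 0 < eps -> exists d, 0 < d /\ forall y, Rabs (y - x) < d -> Rabs (f y - f x) < eps.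
Proof.
  intros H eps Heps. destruct (H eps Heps) as [d [Hd Hf]]. exists d. split; auto.
  intros y Hy. destruct (Req_dec y x) as [->|Hne].
  - rewrite Rminus_diag, Rabs_R0. exact Heps.
  - apply (Hf y). repeat split; auto.
Qed.

Section ContinuityAlgebra.
Context {U : UniformSpace}.
Lemma cont_plus (f g : U -> R) x : continuous f x -> continuous g x -> continuous (fun y => f y + g y) x.
Proof. intros. apply (continuous_plus f g); auto. Qed.
Lemma cont_mult (f g : U -> R) x : continuous f x -> continuous g x -> continuous (fun y => f y * g y) x.
Proof. intros. apply (continuous_mult f g); auto. Qed.
Lemma cont_opp (f : U -> R) x : continuous f x -> continuous (fun y => - f y) x.
Proof. intros. apply (continuous_opp f); auto. Qed.
Lemma cont_minus (f g : U -> R) x : continuous f x -> continuous g x -> continuous (fun y => f y - g y) x.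
Proof. intros. unfold Rminus. apply cont_plus; auto. apply cont_opp; auto. Qed.
Lemma cont_pow (f : U -> R) x n : continuous f x -> continuous (fun y => f y ^ n) x.
Proof. intros. induction n; simpl. apply continuous_const. apply cont_mult; auto. Qed.
Lemma cont_inv (f : U -> R) x : continuous f x -> f x <> 0 -> continuous (fun y => / f y) x.
Proof. intros. apply (continuous_comp f Rinv); auto. apply continuous_Rinv; auto. Qed.
Lemma cont_div (f g : U -> R) x : continuous f x -> continuous g x -> g x <> 0 ->
  continuous (fun y => f y / g y) x.
Proof. intros. unfold Rdiv. apply cont_mult; auto. apply cont_inv; auto. Qed.
Lemma cont_comp (h : R -> R) (f : U -> R) x : continuous f x -> continuity_pt h (f x) ->
  continuous (fun y => h (f y)) x.
Proof. intros. apply (continuous_comp f h); auto. apply continuity_pt_filterlim; auto. Qed.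
End ContinuityAlgebra.

Ltac cont_tac := repeat match goal with
 | |- continuous (fun _ => _ + _) _ => apply cont_plus
 | |- continuous (fun _ => _ - _) _ => apply cont_minus
 | |- continuous (fun _ => _ * _) _ => apply cont_mult
 | |- continuous (fun _ => _ / _) _ => apply cont_div
 | |- continuous (fun _ => - _) _ => apply cont_opp
 | |- continuous (fun _ => _ ^ _) _ => apply cont_pow
 | |- continuous (fun y => y) _ => apply continuous_id
 | |- continuous (fun _ => ?k) _ => apply continuous_const
 | |- continuous (Rmult ?k) _ => apply (cont_mult (fun _ => k) (fun y => y))
 | |- continuous (Rplus ?k) _ => apply (cont_plus (fun _ => k) (fun y => y))
 | |- continuous (Rminus ?k) _ => apply (cont_minus (fun _ => k) (fun y => y))
 end.

Definition uncurry3 (F : R -> R -> R -> R) (p : R * R * R) : R := F (fst (fst p)) (snd (fst p)) (snd p).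
Definition cont3 (F : R -> R -> R -> R) (x y z : R) : Prop := continuous (uncurry3 F) (x, y, z).

Lemma cont3_eps F x y z : cont3 F x y z -> forall eps, 0 < eps -> exists d, 0 < d /\
  forall a b c, Rabs (a - x) < d -> Rabs (b - y) < d -> Rabs (c - z) < d ->
  Rabs (F a b c - F x y z) < eps.
Proof.
  intros H eps Heps. destruct (continuous_near _ _ H (mkposreal eps Heps)) as [d Hd].
  exists d. split; [apply cond_pos|]. intros a b c Ha Hb Hc.
  apply (Hd (a, b, c)). rewrite !ball_pair, !ball_R. tauto.
Qed.

Lemma cont3_slice F x y z : cont3 F x y z -> continuous (fun t => F t y z) x.
Proof.
  intros H. apply (proj2 (filterlim_locally _ _)). intros eps.
  destruct (cont3_eps F x y z H eps (cond_pos eps)) as [d [Hd HF]].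
  exists (mkposreal d Hd). intros t Ht. apply ball_R in Ht. apply ball_R.
  apply HF; rewrite ?Rminus_diag, ?Rabs_R0; auto.
Qed.

Lemma cont_p1 (x y z : R) : continuous (fun p : R * R * R => fst (fst p)) (x, y, z).
Proof. apply (continuous_comp fst fst); apply continuous_fst. Qed.
Lemma cont_p2 (x y z : R) : continuous (fun p : R * R * R => snd (fst p)) (x, y, z).
Proof. apply (continuous_comp fst snd); [apply continuous_fst|apply continuous_snd]. Qed.
Lemma cont_p3 (x y z : R) : continuous (fun p : R * R * R => snd p) (x, y, z).
Proof. apply continuous_snd. Qed.

Ltac cont3_tac := unfold cont3, uncurry3; cbn beta; cont_tac;
  repeat match goal with
  | |- continuous (fun p => fst (fst p)) _ => apply cont_p1
  | |- continuous (fun p => snd (fst p)) _ => apply cont_p2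
  | |- continuous (fun p => snd p) _ => apply cont_p3
  | |- continuous snd _ => apply cont_p3
  end.

(* If G(p, .) is strictly decreasing on [lo, oo) and phi(p) is a zero of G(p, .) there,
   for all p near p0, and G is continuous in p for each fixed x, then phi is continuous
   at p0: the signs of G(p0, phi(p0) -+ e) persist near p0 and trap phi(p). *)
Lemma decreasing_zero_continuous {U : UniformSpace} (G : U -> R -> R) (phi : U -> R)
  (p0 : U) (lo : R) :
  lo < phi p0 ->
  (forall x, continuous (fun p => G p x) p0) ->
  locally p0 (fun p => lo <= phi p /\ G p (phi p) = 0 /\
                       forall a b, lo <= a -> a < b -> G p b < G p a) ->
  continuous phi p0.
Proof.
  intros Hlo HG Hloc. apply (proj2 (filterlim_locally _ _)). intros eps.
  destruct (locally_singleton _ _ Hloc) as [_ [Hz0 Hdec0]].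
  set (e := Rmin (eps / 2) ((phi p0 - lo) / 2)).
  assert (He : 0 < e) by (apply Rmin_pos; pose proof (cond_pos eps); lra).
  assert (He1 : e <= eps / 2) by apply Rmin_l.
  assert (He2 : e <= (phi p0 - lo) / 2) by apply Rmin_r.
  assert (Hm : 0 < G p0 (phi p0 - e)) by (rewrite <- Hz0; apply Hdec0; lra).
  assert (Hp : 0 < - G p0 (phi p0 + e)) by (rewrite <- Hz0 at 1; pose proof (Hdec0 (phi p0) (phi p0 + e)); lra).
  pose proof (continuous_near _ _ (HG (phi p0 - e)) (mkposreal _ Hm)) as Nm.
  pose proof (continuous_near _ _ (HG (phi p0 + e)) (mkposreal _ Hp)) as Np.
  generalize (filter_and _ _ Hloc (filter_and _ _ Nm Np)).
  apply filter_imp. intros p [[Hlop [Hz Hdec]] [Hgm Hgp]]. simpl in Hgm, Hgp.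
  apply Rabs_def2 in Hgm. apply Rabs_def2 in Hgp. apply ball_R.
  assert (Hweak : forall a b, lo <= a -> a <= b -> G p b <= G p a).
  { intros a b Ha Hab. destruct (Req_dec a b) as [->|]; [lra|]. left. apply Hdec; lra. }
  assert (phi p0 - e < phi p).
  { destruct (Rlt_le_dec (phi p0 - e) (phi p)) as [|Hle]; auto.
    pose proof (Hweak (phi p) (phi p0 - e) Hlop Hle). lra. }
  assert (phi p < phi p0 + e).
  { destruct (Rlt_le_dec (phi p) (phi p0 + e)) as [|Hle]; auto.
    pose proof (Hweak (phi p0 + e) (phi p) ltac:(lra) Hle). lra. }
  apply Rabs_def1; lra.
Qed.

(* Arithmetic core of implicit differentiation: - a / q is close to - Gt / Q0 when a is
   close to Gt and q is close to Q0 <> 0, with explicit tolerances. *)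
Lemma quotient_estimate (a q Gt Q0 eps : R) : 0 < eps -> Q0 <> 0 ->
  Rabs (q - Q0) < Rabs Q0 / 2 ->
  Rabs (q - Q0) < eps * (Rabs Q0 * Rabs Q0) / (4 * (Rabs Gt + 1)) ->
  Rabs (a - Gt) < eps * Rabs Q0 / 4 ->
  Rabs (- a / q - - Gt / Q0) < eps.
Proof.
  intros He HQ H1 H2 H3.
  assert (HB : 0 < Rabs Q0) by (apply Rabs_pos_lt; auto).
  assert (HA : 0 <= Rabs Gt) by apply Rabs_pos.
  assert (Hq : Rabs Q0 / 2 < Rabs q).
  { pose proof (Rabs_triang_inv Q0 q). rewrite Rabs_minus_sym in H1. lra. }
  assert (Hq0 : q <> 0) by (intro E; rewrite E, Rabs_R0 in Hq; lra).
  replace (- a / q - - Gt / Q0) with ((Gt * (q - Q0) + (Gt - a) * Q0) / (q * Q0)) by (field; auto).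
  unfold Rdiv. rewrite Rabs_mult, Rabs_inv, Rabs_mult.
  apply Rmult_lt_reg_r with (Rabs q * Rabs Q0); [apply Rmult_lt_0_compat; lra|].
  rewrite Rmult_assoc, Rinv_l, Rmult_1_r by (apply Rgt_not_eq; apply Rmult_lt_0_compat; lra).
  pose proof (Rabs_triang (Gt * (q - Q0)) ((Gt - a) * Q0)) as Htri. rewrite !Rabs_mult in Htri.
  rewrite Rabs_minus_sym in H3.
  assert (Rabs Gt * Rabs (q - Q0) <= eps * (Rabs Q0 * Rabs Q0) / 4).
  { apply Rle_trans with ((Rabs Gt + 1) * (eps * (Rabs Q0 * Rabs Q0) / (4 * (Rabs Gt + 1)))).
    - apply Rmult_le_compat; try apply Rabs_pos; lra.
    - right. field. lra. }
  assert (Rabs (Gt - a) * Rabs Q0 < eps * Rabs Q0 / 4 * Rabs Q0) by (apply Rmult_lt_compat_r; auto).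
  assert (Rabs Q0 * Rabs Q0 / 2 < Rabs q * Rabs Q0) by nra.
  assert (eps * (Rabs Q0 * Rabs Q0) / 2 < eps * (Rabs q * Rabs Q0)) by nra.
  nra.
Qed.

Lemma implicit_derivative (phi : R -> R) (G : R -> R -> R) (Q : R -> R -> R -> R)
  (t0 Gt : R) :
  locally t0 (fun t => G t (phi t) = 0) ->
  (forall t y y', G t y - G t y' = (y - y') * Q t y y') ->
  derivable_pt_lim (fun t => G t (phi t0)) t0 Gt ->
  continuous (fun t => Q t (phi t) (phi t0)) t0 ->
  Q t0 (phi t0) (phi t0) <> 0 ->
  derivable_pt_lim phi t0 (- Gt / Q t0 (phi t0) (phi t0)).
Proof.
  intros [d0 HG] HQ HGt HQc HQ0 eps Heps. set (Q0 := Q t0 (phi t0) (phi t0)) in *.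
  assert (HB : 0 < Rabs Q0) by (apply Rabs_pos_lt; auto).
  assert (HA : 0 <= Rabs Gt) by apply Rabs_pos.
  assert (Htol : 0 < Rmin (Rabs Q0 / 2) (eps * (Rabs Q0 * Rabs Q0) / (4 * (Rabs Gt + 1)))).
  { apply Rmin_pos; [lra|]. apply Rdiv_lt_0_compat; [apply Rmult_lt_0_compat|]; nra. }
  destruct (continuous_near _ _ HQc (mkposreal _ Htol)) as [d1 Hq]. simpl in Hq. fold Q0 in Hq.
  destruct (HGt (eps * Rabs Q0 / 4)) as [d2 Hd2]; [nra|].
  assert (Hd : 0 < Rmin d0 (Rmin d1 d2)) by (repeat apply Rmin_pos; apply cond_pos).
  exists (mkposreal _ Hd). intros h Hh0 Hh. simpl in Hh.
  assert (Hball : forall d : posreal, Rmin d0 (Rmin d1 d2) <= d -> ball t0 d (t0 + h)).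
  { intros d Hle. apply ball_R. replace (t0 + h - t0) with h by ring. lra. }
  assert (E1 : G (t0 + h) (phi (t0 + h)) = 0) by (apply HG, Hball, Rmin_l).
  assert (E0 : G t0 (phi t0) = 0) by (apply HG, ball_center).
  specialize (Hd2 h Hh0 ltac:(eapply Rlt_le_trans; [exact Hh|]; eapply Rle_trans; apply Rmin_r)).
  specialize (Hq (t0 + h) (Hball d1 ltac:(eapply Rle_trans; [apply Rmin_r|apply Rmin_l]))).
  simpl in Hd2. rewrite E0, Rminus_0_r in Hd2.
  set (q := Q (t0 + h) (phi (t0 + h)) (phi t0)) in *.
  assert (Hqn : q <> 0).
  { intro E. pose proof (Rmin_l (Rabs Q0 / 2) (eps * (Rabs Q0 * Rabs Q0) / (4 * (Rabs Gt + 1)))).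
    rewrite E, Rminus_0_l, Rabs_Ropp in Hq. lra. }
  pose proof (HQ (t0 + h) (phi (t0 + h)) (phi t0)) as HQh. fold q in HQh. rewrite E1 in HQh.
  assert (Ephi : phi (t0 + h) - phi t0 = - G (t0 + h) (phi t0) / q).
  { apply (Rmult_eq_reg_r q); [|auto]. unfold Rdiv.
    rewrite Rmult_assoc, Rinv_l, Rmult_1_r by auto. lra. }
  replace ((phi (t0 + h) - phi t0) / h) with (- (G (t0 + h) (phi t0) / h) / q)
    by (rewrite Ephi; field; auto).
  apply quotient_estimate; auto.
  - eapply Rlt_le_trans; [exact Hq|apply Rmin_l].
  - eapply Rlt_le_trans; [exact Hq|apply Rmin_r].
Qed.

Lemma increasing_sign_change (f f' : R -> R) (t0 h : R) : 0 < h -> f t0 = 0 ->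
  (forall t, t0 - h <= t <= t0 + h -> derivable_pt_lim f t (f' t) /\ 0 < f' t) ->
  f (t0 - h) < 0 /\ 0 < f (t0 + h).
Proof.
  intros Hh H0 Hd.
  destruct (MVT_cor2 f f' (t0 - h) t0) as [c [Hc1 Hc2]]; [lra|intros; apply Hd; lra|].
  destruct (MVT_cor2 f f' t0 (t0 + h)) as [c' [Hc1' Hc2']]; [lra|intros; apply Hd; lra|].
  destruct (Hd c ltac:(lra)) as [_ Hp]. destruct (Hd c' ltac:(lra)) as [_ Hp'].
  assert (0 < f' c * (t0 - (t0 - h))) by (apply Rmult_lt_0_compat; lra).
  assert (0 < f' c' * (t0 + h - t0)) by (apply Rmult_lt_0_compat; lra).
  lra.
Qed.

Lemma sqrt_bound x y rho : sqrt (x ^ 2 + y ^ 2) < rho -> Rabs x < rho /\ Rabs y < rho.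
Proof.
  intros H. rewrite <- !sqrt_Rsqr_abs. unfold Rsqr.
  split; eapply Rle_lt_trans; try exact H; apply sqrt_le_1_alt; nra.
Qed.

(* The monic cubic x^3 + c2 x^2 + c1 x + c0; its divided difference Qf, i.e.
   cub y - cub x = (y - x) Qf x y; and disc, with disc r / 4 the squared imaginary part
   of the two other roots when r is a real root. *)
Definition cub (c2 c1 c0 x : R) : R := x ^ 3 + c2 * x ^ 2 + c1 * x + c0.
Definition Qf (c2 c1 x y : R) : R := x ^ 2 + x * y + y ^ 2 + c2 * (x + y) + c1.
Definition disc (c2 c1 x : R) : R := 4 * (c1 + x * (c2 + x)) - (c2 + x) ^ 2.

Lemma cub_diff c2 c1 c0 x y : cub c2 c1 c0 y - cub c2 c1 c0 x = (y - x) * Qf c2 c1 x y.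
Proof. unfold cub, Qf. ring. Qed.

Lemma cub_factor c2 c1 c0 r x : cub c2 c1 c0 r = 0 -> 0 <= disc c2 c1 r ->
  cub c2 c1 c0 x = (x - r) * ((x - (- (c2 + r) / 2)) ^ 2 + (sqrt (disc c2 c1 r / 4)) ^ 2).
Proof.
  intros Hr Hd. rewrite pow2_sqrt by lra.
  replace (cub c2 c1 c0 x) with (cub c2 c1 c0 x - cub c2 c1 c0 r) by lra.
  rewrite cub_diff. unfold Qf, disc. field.
Qed.

Lemma cub_continuous c2 c1 c0 x : continuity_pt (cub c2 c1 c0) x.
Proof. apply continuity_pt_of. unfold cub. cont_tac. Qed.

Lemma Derive_eta (f : R -> R) x l : is_derive f x l -> Derive (fun y => f y) x = l.
Proof. apply is_derive_unique. Qed.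

Lemma cub_der (k2 k1 k0 : R -> R) x l2 l1 l0 y :
  derivable_pt_lim k2 x l2 -> derivable_pt_lim k1 x l1 -> derivable_pt_lim k0 x l0 ->
  derivable_pt_lim (fun t => cub (k2 t) (k1 t) (k0 t) y) x (l2 * y ^ 2 + l1 * y + l0).
Proof.
  intros H2 H1 H0. apply is_derive_Reals in H2, H1, H0. apply is_derive_Reals.
  unfold cub. auto_derive; [repeat split; eexists; eassumption|].
  rewrite (Derive_eta _ _ _ H2), (Derive_eta _ _ _ H1), (Derive_eta _ _ _ H0).
  ring.
Qed.

Lemma continuous_fst_comp {U V : UniformSpace} (k : U -> R) (p : U) (v : V) :
  continuous k p -> continuous (fun q : U * V => k (fst q)) (p, v).
Proof. intros. apply (continuous_comp fst k); [apply continuous_fst|auto]. Qed.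

Lemma continuous_fst2_comp {U V W : UniformSpace} (k : U -> R) (p : U) (v : V) (w : W) :
  continuous k p -> continuous (fun q : U * V * W => k (fst (fst q))) (p, v, w).
Proof. intros. apply (continuous_fst_comp (fun q : U * V => k (fst q))), continuous_fst_comp; auto. Qed.

Lemma quadratic_cofactor_bounds {U : UniformSpace} (k2 k1 : U -> R) (p0 : U) (r0 : R) :
  continuous k2 p0 -> continuous k1 p0 ->
  0 < Qf (k2 p0) (k1 p0) r0 r0 -> 0 < disc (k2 p0) (k1 p0) r0 ->
  exists eps, 0 < eps /\ locally p0 (fun p =>
    (forall x y, r0 - eps <= x <= r0 + eps -> r0 - eps <= y <= r0 + eps ->
       Qf (k2 p0) (k1 p0) r0 r0 / 2 <= Qf (k2 p) (k1 p) x y) /\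
    (forall x, r0 - eps <= x <= r0 + eps -> 0 < disc (k2 p) (k1 p) x)).
Proof.
  intros C2 C1 HQ Hd.
  set (Q0 := Qf (k2 p0) (k1 p0) r0 r0) in *. set (d0 := disc (k2 p0) (k1 p0) r0) in *.
  assert (CQ : continuous (fun q : U * R * R =>
             Qf (k2 (fst (fst q))) (k1 (fst (fst q))) (snd (fst q)) (snd q)) (p0, r0, r0))
    by (unfold Qf; cont_tac; repeat first
          [apply continuous_snd | apply (continuous_fst_comp snd) | apply continuous_fst2_comp]; auto).
  assert (CD : continuous (fun q : U * R => disc (k2 (fst q)) (k1 (fst q)) (snd q)) (p0, r0))
    by (unfold disc; cont_tac; repeat first [apply continuous_snd | apply continuous_fst_comp]; auto).
  destruct (continuous_near _ _ CQ (mkposreal (Q0 / 2) ltac:(lra))) as [e1 He1].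
  destruct (continuous_near _ _ CD (mkposreal d0 Hd)) as [e2 He2]. simpl in He1, He2.
  set (e := Rmin e1 e2).
  assert (He : 0 < e) by (apply Rmin_pos; apply cond_pos).
  assert (Hee1 : e <= e1) by apply Rmin_l. assert (Hee2 : e <= e2) by apply Rmin_r.
  exists (e / 2). split; [lra|]. exists (mkposreal e He). intros p Hp. simpl in Hp.
  split.
  - intros x y Hx Hy. specialize (He1 (p, x, y)).
    assert (Habs : Rabs (Qf (k2 p) (k1 p) x y - Q0) < Q0 / 2).
    { apply He1. rewrite !ball_pair, !ball_R.
      repeat split; try (eapply ball_le; [|exact Hp]; lra); apply Rabs_def1; lra. }
    apply Rabs_def2 in Habs. lra.
  - intros x Hx. specialize (He2 (p, x)).
    assert (Habs : Rabs (disc (k2 p) (k1 p) x - d0) < d0).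
    { apply He2. rewrite !ball_pair, !ball_R.
      split; [eapply ball_le; [|exact Hp]; lra|]. apply Rabs_def1; lra. }
    apply Rabs_def2 in Habs. lra.
Qed.

(* A real root r0 at p0 at which the cubic is increasing (Qf > 0 near r0) persists:
   for p near p0 there is a root within eps of r0 (sign change plus IVT). *)
Lemma cubic_root_persists {U : UniformSpace} (k2 k1 k0 : U -> R) (p0 : U) (r0 eps kap : R) :
  continuous k2 p0 -> continuous k1 p0 -> continuous k0 p0 -> 0 < eps -> 0 < kap ->
  cub (k2 p0) (k1 p0) (k0 p0) r0 = 0 ->
  (forall x y, r0 - eps <= x <= r0 + eps -> r0 - eps <= y <= r0 + eps ->
     kap <= Qf (k2 p0) (k1 p0) x y) ->
  locally p0 (fun p => exists r, r0 - eps <= r <= r0 + eps /\ cub (k2 p) (k1 p) (k0 p) r = 0).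
Proof.
  intros C2 C1 C0 Heps Hkap Hr HQ.
  assert (Sp : 0 < cub (k2 p0) (k1 p0) (k0 p0) (r0 + eps)).
  { pose proof (cub_diff (k2 p0) (k1 p0) (k0 p0) r0 (r0 + eps)).
    pose proof (HQ r0 (r0 + eps) ltac:(lra) ltac:(lra)). nra. }
  assert (Sm : 0 < - cub (k2 p0) (k1 p0) (k0 p0) (r0 - eps)).
  { pose proof (cub_diff (k2 p0) (k1 p0) (k0 p0) (r0 - eps) r0).
    pose proof (HQ (r0 - eps) r0 ltac:(lra) ltac:(lra)). nra. }
  assert (Cp : forall t, continuous (fun p => cub (k2 p) (k1 p) (k0 p) t) p0)
    by (intro t; unfold cub; cont_tac; auto).
  generalize (filter_and _ _ (continuous_near _ _ (Cp (r0 + eps)) (mkposreal _ Sp))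
                             (continuous_near _ _ (Cp (r0 - eps)) (mkposreal _ Sm))).
  apply filter_imp. intros p [Hp Hm]. simpl in Hp, Hm.
  apply Rabs_def2 in Hp. apply Rabs_def2 in Hm.
  destruct (IVT_interv (cub (k2 p) (k1 p) (k0 p)) (r0 - eps) (r0 + eps)) as [r Hr'];
    [intros x _; apply cub_continuous|lra|lra|lra|].
  exists r. exact Hr'.
Qed.

Lemma cubic_simple_root_persists {U : UniformSpace} (k2 k1 k0 : U -> R) (p0 : U) (r0 : R) :
  continuous k2 p0 -> continuous k1 p0 -> continuous k0 p0 ->
  cub (k2 p0) (k1 p0) (k0 p0) r0 = 0 -> 0 < Qf (k2 p0) (k1 p0) r0 r0 ->
  0 < disc (k2 p0) (k1 p0) r0 -> r0 < 0 ->
  exists eps kap, 0 < eps /\ 0 < kap /\ locally p0 (fun p =>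
    (exists r, r0 - eps <= r <= r0 + eps /\ cub (k2 p) (k1 p) (k0 p) r = 0) /\
    (forall x y, r0 - eps <= x <= r0 + eps -> r0 - eps <= y <= r0 + eps ->
        kap <= Qf (k2 p) (k1 p) x y) /\
    (forall x, r0 - eps <= x <= r0 + eps -> x < 0 /\ 0 < disc (k2 p) (k1 p) x)).
Proof.
  intros C2 C1 C0 Hr HQ Hd Hneg.
  destruct (quadratic_cofactor_bounds k2 k1 p0 r0 C2 C1 HQ Hd) as [e [He Hloc]].
  set (eps := Rmin e (- r0 / 2)).
  assert (Heps : 0 < eps) by (apply Rmin_pos; lra).
  assert (Hle1 : eps <= e) by apply Rmin_l. assert (Hle2 : eps <= - r0 / 2) by apply Rmin_r.
  set (kap := Qf (k2 p0) (k1 p0) r0 r0 / 2).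
  exists eps, kap. split; [|split]; [auto|unfold kap; lra|].
  destruct (locally_singleton _ _ Hloc) as [HQ0 _].
  assert (Hroot := cubic_root_persists k2 k1 k0 p0 r0 eps kap C2 C1 C0 Heps
                     ltac:(unfold kap; lra) Hr ltac:(intros; apply HQ0; lra)).
  generalize (filter_and _ _ Hroot Hloc). apply filter_imp.
  intros p [Hex [HQp Hdp]]. split; [exact Hex|split].
  - intros x y Hx Hy. apply HQp; lra.
  - intros x Hx. split; [lra|]. apply Hdp. lra.
Qed.

Section CubicRoot.
Variables (k2 k1 k0 kd2 kd1 kd0 : R -> R -> R -> R) (B : R -> R -> R -> Prop).
Variables (r0 eps kap : R).
Hypothesis Hkap : 0 < kap.
Hypothesis B_open : forall mu d1 d2, B mu d1 d2 ->
  locally (mu, d1, d2) (fun p => B (fst (fst p)) (snd (fst p)) (snd p)).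
Hypothesis k_cont : forall mu d1 d2, B mu d1 d2 ->
  cont3 k2 mu d1 d2 /\ cont3 k1 mu d1 d2 /\ cont3 k0 mu d1 d2.
Hypothesis kd_cont : forall mu d1 d2, B mu d1 d2 ->
  cont3 kd2 mu d1 d2 /\ cont3 kd1 mu d1 d2 /\ cont3 kd0 mu d1 d2.
Hypothesis k_der : forall mu d1 d2, B mu d1 d2 ->
  derivable_pt_lim (fun t => k2 t d1 d2) mu (kd2 mu d1 d2) /\
  derivable_pt_lim (fun t => k1 t d1 d2) mu (kd1 mu d1 d2) /\
  derivable_pt_lim (fun t => k0 t d1 d2) mu (kd0 mu d1 d2).
Hypothesis root_exists : forall mu d1 d2, B mu d1 d2 ->
  exists r, r0 - eps <= r <= r0 + eps /\ cub (k2 mu d1 d2) (k1 mu d1 d2) (k0 mu d1 d2) r = 0.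
Hypothesis Q_bound : forall mu d1 d2, B mu d1 d2 ->
  forall x y, r0 - eps <= x <= r0 + eps -> r0 - eps <= y <= r0 + eps ->
  kap <= Qf (k2 mu d1 d2) (k1 mu d1 d2) x y.

Definition root (mu d1 d2 : R) : R :=
  epsilon (inhabits 0) (fun r => r0 - eps <= r <= r0 + eps /\
                                 cub (k2 mu d1 d2) (k1 mu d1 d2) (k0 mu d1 d2) r = 0).

(* Implicit derivative of the root with respect to mu. *)
Definition root_rate (mu d1 d2 : R) : R :=
  - (kd2 mu d1 d2 * root mu d1 d2 ^ 2 + kd1 mu d1 d2 * root mu d1 d2 + kd0 mu d1 d2)
  / Qf (k2 mu d1 d2) (k1 mu d1 d2) (root mu d1 d2) (root mu d1 d2).

(* Real part of the two other roots, and its derivative with respect to mu. *)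
Definition re_part (mu d1 d2 : R) : R := - (k2 mu d1 d2 + root mu d1 d2) / 2.
Definition re_rate (mu d1 d2 : R) : R := - (kd2 mu d1 d2 + root_rate mu d1 d2) / 2.

Lemma root_spec mu d1 d2 : B mu d1 d2 ->
  r0 - eps <= root mu d1 d2 <= r0 + eps /\
  cub (k2 mu d1 d2) (k1 mu d1 d2) (k0 mu d1 d2) (root mu d1 d2) = 0.
Proof. intros HB. exact (epsilon_spec (inhabits 0) _ (root_exists mu d1 d2 HB)). Qed.

Lemma root_unique mu d1 d2 x : B mu d1 d2 -> r0 - eps <= x <= r0 + eps ->
  cub (k2 mu d1 d2) (k1 mu d1 d2) (k0 mu d1 d2) x = 0 -> x = root mu d1 d2.
Proof.
  intros HB Hx Hc. destruct (root_spec mu d1 d2 HB) as [Hr Hcr].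
  pose proof (cub_diff (k2 mu d1 d2) (k1 mu d1 d2) (k0 mu d1 d2) x (root mu d1 d2)) as E.
  pose proof (Q_bound mu d1 d2 HB x (root mu d1 d2) Hx Hr).
  rewrite Hcr, Hc in E. destruct (Req_dec (root mu d1 d2 - x) 0); [lra|].
  assert ((root mu d1 d2 - x) * Qf (k2 mu d1 d2) (k1 mu d1 d2) x (root mu d1 d2) <> 0)
    by (apply Rmult_integral_contrapositive; split; lra).
  lra.
Qed.

Lemma Q_root_pos mu d1 d2 : B mu d1 d2 ->
  0 < Qf (k2 mu d1 d2) (k1 mu d1 d2) (root mu d1 d2) (root mu d1 d2).
Proof.
  intros HB. destruct (root_spec mu d1 d2 HB) as [Hr _].
  pose proof (Q_bound mu d1 d2 HB _ _ Hr Hr). lra.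
Qed.

(* Continuity: |r(p) - r(p1)| kap <= |cub_p (r(p1))|, which tends to 0 as p -> p1. *)
Lemma root_cont mu d1 d2 : B mu d1 d2 -> cont3 root mu d1 d2.
Proof.
  intros HB. destruct (k_cont mu d1 d2 HB) as [C2 [C1 C0]].
  set (r1 := root mu d1 d2). destruct (root_spec mu d1 d2 HB) as [Hr1 Hc1]. fold r1 in Hr1, Hc1.
  assert (CF : cont3 (fun a b c => cub (k2 a b c) (k1 a b c) (k0 a b c) r1) mu d1 d2)
    by (unfold cub; cont3_tac; auto).
  unfold cont3. apply (proj2 (filterlim_locally _ _)). intros e.
  assert (Hek : 0 < e * kap) by (apply Rmult_lt_0_compat; [apply cond_pos|auto]).
  generalize (filter_and _ _ (B_open mu d1 d2 HB) (continuous_near _ _ CF (mkposreal _ Hek))).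
  apply filter_imp. intros [[a b] c] [HBp Hc]. unfold uncurry3 in *; simpl in *.
  rewrite Hc1, Rminus_0_r in Hc. apply ball_R. fold r1.
  destruct (root_spec a b c HBp) as [Hr Hcr].
  pose proof (cub_diff (k2 a b c) (k1 a b c) (k0 a b c) r1 (root a b c)) as E.
  rewrite Hcr in E. pose proof (Q_bound a b c HBp r1 (root a b c) Hr1 Hr) as HQ.
  assert (Hlow : Rabs (root a b c - r1) * kap <=
                 Rabs (root a b c - r1) * Qf (k2 a b c) (k1 a b c) r1 (root a b c))
    by (apply Rmult_le_compat_l; [apply Rabs_pos|auto]).
  rewrite <- (Rabs_right (Qf (k2 a b c) (k1 a b c) r1 (root a b c))) in Hlow by lra.
  rewrite <- Rabs_mult, <- E, Rminus_0_l, Rabs_Ropp in Hlow.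
  apply Rmult_lt_reg_r with kap; [auto|]. lra.
Qed.

Lemma root_der mu d1 d2 : B mu d1 d2 ->
  derivable_pt_lim (fun t => root t d1 d2) mu (root_rate mu d1 d2).
Proof.
  intros HB. destruct (k_cont mu d1 d2 HB) as [C2 [C1 C0]].
  destruct (k_der mu d1 d2 HB) as [D2 [D1 D0]].
  pose proof (root_cont mu d1 d2 HB) as CR.
  apply (implicit_derivative (fun t => root t d1 d2)
           (fun t y => cub (k2 t d1 d2) (k1 t d1 d2) (k0 t d1 d2) y)
           (fun t y y' => Qf (k2 t d1 d2) (k1 t d1 d2) y' y)).
  - eapply filter_imp; [|exact (locally3_slice _ _ _ _ (B_open mu d1 d2 HB))].
    intros t HBt. apply (root_spec t d1 d2 HBt).
  - intros t y y'. apply cub_diff.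
  - apply cub_der; auto.
  - apply (cont3_slice (fun a b c => Qf (k2 a b c) (k1 a b c) (root mu d1 d2) (root a b c))).
    unfold Qf. cont3_tac; auto.
  - pose proof (Q_root_pos mu d1 d2 HB). lra.
Qed.

Lemma re_part_der mu d1 d2 : B mu d1 d2 ->
  derivable_pt_lim (fun t => re_part t d1 d2) mu (re_rate mu d1 d2).
Proof.
  intros HB. pose proof (root_der mu d1 d2 HB) as H1.
  destruct (k_der mu d1 d2 HB) as [H2 _].
  apply is_derive_Reals in H1, H2. apply is_derive_Reals.
  unfold re_part, re_rate. auto_derive; [repeat split; eexists; eassumption|].
  rewrite (Derive_eta _ _ _ H1), (Derive_eta _ _ _ H2). field.
Qed.

Lemma re_part_cont mu d1 d2 : B mu d1 d2 -> cont3 re_part mu d1 d2.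
Proof.
  intros HB. destruct (k_cont mu d1 d2 HB) as [C2 _].
  pose proof (root_cont mu d1 d2 HB). unfold re_part. cont3_tac; auto.
Qed.

Lemma re_rate_cont mu d1 d2 : B mu d1 d2 -> cont3 re_rate mu d1 d2.
Proof.
  intros HB. destruct (k_cont mu d1 d2 HB) as [C2 [C1 C0]].
  destruct (kd_cont mu d1 d2 HB) as [E2 [E1 E0]].
  pose proof (root_cont mu d1 d2 HB). pose proof (Q_root_pos mu d1 d2 HB).
  unfold re_rate, root_rate, Qf in *. cont3_tac; auto. cbn. lra.
Qed.

End CubicRoot.

Definition cp2 (M : nat -> nat -> R) : R := - (M 0%nat 0%nat + M 1%nat 1%nat + M 2%nat 2%nat).
Definition cp1 (M : nat -> nat -> R) : R :=
  M 0%nat 0%nat * M 1%nat 1%nat - M 0%nat 1%nat * M 1%nat 0%nat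
  + M 0%nat 0%nat * M 2%nat 2%nat - M 0%nat 2%nat * M 2%nat 0%nat
  + M 1%nat 1%nat * M 2%nat 2%nat - M 1%nat 2%nat * M 2%nat 1%nat.
Definition cp0 (M : nat -> nat -> R) : R := - det3 M.

Lemma charpoly_cub M x : charpoly M x = cub (cp2 M) (cp1 M) (cp0 M) x.
Proof. unfold charpoly, cub, cp2, cp1, cp0, det3. simpl. ring. Qed.

(* Mass balance: when D1 = D2 = D, the row vector (1, 1/g1, 1/(g1 g2)) is a left
   eigenvector of the Jacobian for the eigenvalue -D, at every point (N, P, Z). *)
Lemma washout_eigenvalue f f' h h' g1 g2 D N P Z :
  0 < g1 -> 0 < g2 -> charpoly (jac f f' h h' g1 g2 D D D N P Z) (- D) = 0.
Proof.
  intros Hg1 Hg2.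
  assert (H : g1 * g2 * charpoly (jac f f' h h' g1 g2 D D D N P Z) (- D) = 0)
    by (unfold charpoly, det3, jac; simpl; ring).
  apply Rmult_integral in H. destruct H as [H|H]; [nra|exact H].
Qed.

(* Unit differences of a function of two variables.  For E affine in each variable
   separately (biaffine), they are its partial derivatives. *)
Definition dU (E : R -> R -> R) (u v : R) : R := E (u + 1) v - E u v.
Definition dV (E : R -> R -> R) (u v : R) : R := E u (v + 1) - E u v.
Definition biaffine (E : R -> R -> R) : Prop := forall u v,
  E u v = E 0 0 + dU E 0 0 * u + dV E 0 0 * v + (dU E 0 1 - dU E 0 0) * (u * v).

Lemma biaffine_der E (p q : R -> R) x p' q' : biaffine E ->
  derivable_pt_lim p x p' -> derivable_pt_lim q x q' ->
  derivable_pt_lim (fun t => E (p t) (q t)) x (dU E (p x) (q x) * p' + dV E (p x) (q x) * q').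
Proof.
  intros HE Hp Hq.
  set (a := E 0 0). set (b := dU E 0 0). set (c := dV E 0 0). set (d := dU E 0 1 - dU E 0 0).
  assert (HU : dU E (p x) (q x) = b + d * q x).
  { unfold dU at 1. rewrite (HE (p x + 1) (q x)), (HE (p x) (q x)). fold d a b c. ring. }
  assert (HV : dV E (p x) (q x) = c + d * p x).
  { unfold dV at 1. rewrite (HE (p x) (q x + 1)), (HE (p x) (q x)). fold d a b c. ring. }
  rewrite HU, HV. apply is_derive_Reals in Hp, Hq. apply is_derive_Reals.
  apply (is_derive_ext (fun t => a + b * p t + c * q t + d * (p t * q t))).
  { intro t. rewrite (HE (p t) (q t)). reflexivity. }
  auto_derive; [repeat split; eexists; eassumption|].
  rewrite (Derive_eta _ _ _ Hp), (Derive_eta _ _ _ Hq). ring.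
Qed.

Section Response.
Variables (f f' : R -> R) (g D0 : R).
Hypotheses (Hf : response_ok f f' g D0) (Hg : 0 < g).

Lemma rf_zero : f 0 = 0.
Proof. apply Hf. Qed.
Lemma rf_der x : derivable_pt_lim f x (f' x).
Proof. apply Hf. Qed.
Lemma rf_pos x : 0 <= x -> 0 < f' x.
Proof. apply Hf. Qed.
Lemma rf_cont x : continuity_pt f x.
Proof. apply derivable_continuous_pt. exists (f' x). apply rf_der. Qed.
Lemma rf_cont' x : continuity_pt f' x.
Proof. apply Hf. Qed.

Lemma rf_incr x y : 0 <= x -> x < y -> f x < f y.
Proof.
  intros Hx Hxy. destruct (MVT_cor2 f f' x y Hxy) as [c [Hc1 Hc2]]; [intros; apply rf_der|].
  pose proof (rf_pos c ltac:(lra)).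
  assert (0 < f' c * (y - x)) by (apply Rmult_lt_0_compat; lra). lra.
Qed.

(* The saturation level L of f exceeds d / g for d near D0, so f(x) = d / g is solvable. *)
Lemma lam_spec : exists eta, 0 < eta /\ forall d, 0 < d -> Rabs (d - D0) < eta ->
  0 < lam f g d /\ f (lam f g d) = d / g.
Proof.
  destruct Hf as [H0 [_ [_ [_ [_ [_ [L [HL [eta [Heta Hlt]]]]]]]]]].
  exists eta. split; [auto|]. intros d Hd Hdd. specialize (Hlt d Hdd).
  assert (Hdg : 0 < d / g) by (apply Rdiv_lt_0_compat; lra).
  destruct (HL (L - d / g) ltac:(lra)) as [M HM].
  set (X := Rmax M 1).
  assert (HX : 0 < X) by (unfold X; pose proof (Rmax_r M 1); lra).
  assert (HfX : d / g < f X) by (specialize (HM X (Rmax_l M 1)); apply Rabs_def2 in HM; lra).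
  destruct (IVT_interv (fun x => f x - d / g) 0 X) as [z [Hz1 Hz2]].
  - intros x _. apply continuity_pt_of. cont_tac; [|lra].
    apply continuity_pt_filterlim, rf_cont.
  - exact HX.
  - rewrite H0. lra.
  - lra.
  - assert (Hex : exists x, 0 <= x /\ f x = d / g) by (exists z; split; lra).
    destruct (epsilon_spec (inhabits 0) _ Hex) as [Hl1 Hl2]. fold (lam f g d) in Hl1, Hl2.
    split; [|auto]. destruct Hl1 as [|E]; auto. rewrite <- E, H0 in Hl2. lra.
Qed.

(* lam is the zero of the decreasing family x |-> d / g - f x, hence continuous. *)
Lemma lam_cont eta :
  (forall d, 0 < d -> Rabs (d - D0) < eta -> 0 < lam f g d /\ f (lam f g d) = d / g) ->
  forall d, 0 < d -> Rabs (d - D0) < eta -> continuity_pt (lam f g) d.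
Proof.
  intros Hlam d Hd Hdd. apply continuity_pt_of.
  apply (decreasing_zero_continuous (fun d x => d / g - f x) (lam f g) d 0).
  - apply Hlam; auto.
  - intros x. cont_tac. lra.
  - assert (He : 0 < Rmin d (eta - Rabs (d - D0))) by (apply Rmin_pos; lra).
    apply (locally_R _ _ _ He). intros d' Hd'.
    pose proof (Rmin_l d (eta - Rabs (d - D0))) as R1. pose proof (Rmin_r d (eta - Rabs (d - D0))) as R2.
    pose proof (Rabs_triang (d' - d) (d - D0)) as Htri.
    replace (d' - d + (d - D0)) with (d' - D0) in Htri by ring.
    pose proof (Rabs_def2 _ _ Hd').
    destruct (Hlam d' ltac:(lra) ltac:(lra)) as [Hpos Heq].
    cbv beta. repeat split; [lra|lra|].
    intros a b Ha Hab. pose proof (rf_incr a b Ha Hab). lra.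
Qed.
End Response.

Section Model.
Variables (D g1 g2 : R) (f1 f1' f1'' f2 f2' : R -> R).
Hypotheses (HD : 0 < D) (Hg1 : 0 < g1) (Hg2 : 0 < g2)
  (Hf1 : response_ok f1 f1' g1 D) (Hf2 : response_ok f2 f2' g2 D)
  (Hf1d : forall x, derivable_pt_lim f1' x (f1'' x)) (Hf1c : continuity f1'').
Variable eta2 : R.
Hypothesis Heta2 : 0 < eta2.
Hypothesis Hlam2 : forall d, 0 < d -> Rabs (d - D) < eta2 ->
  0 < lam f2 g2 d /\ f2 (lam f2 g2 d) = d / g2.

Definition lZ (d : R) : R := lam f2 g2 d.
Definition Nf (mu d2 : R) : R := Nstar f1 f2 g2 D mu d2.

Definition adm (mu d2 : R) : Prop := 0 < mu /\ 0 < d2 /\ Rabs (d2 - D) < eta2.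

Definition Gn (mu l n : R) : R := (mu - n) * D - l * f1 n.

Lemma lZ_pos d2 : 0 < d2 -> Rabs (d2 - D) < eta2 -> 0 < lZ d2.
Proof. intros. apply Hlam2; auto. Qed.

Lemma lZ_cont d2 : 0 < d2 -> Rabs (d2 - D) < eta2 -> continuity_pt lZ d2.
Proof. intros. apply (lam_cont f2 f2' g2 D Hf2 Hg2 eta2 Hlam2); auto. Qed.

Lemma Gn_decr mu l a b : 0 < l -> 0 <= a -> a < b -> Gn mu l b < Gn mu l a.
Proof. intros Hl Ha Hab. unfold Gn. pose proof (rf_incr f1 f1' g1 D Hf1 a b Ha Hab). nra. Qed.

Lemma N_spec mu d2 : 0 < mu -> 0 < lZ d2 -> 0 < Nf mu d2 < mu /\ Gn mu (lZ d2) (Nf mu d2) = 0.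
Proof.
  intros Hmu Hl. pose proof (rf_zero f1 f1' g1 D Hf1) as H0.
  pose proof (rf_incr f1 f1' g1 D Hf1 0 mu ltac:(lra) Hmu) as Hfmu. rewrite H0 in Hfmu.
  destruct (IVT_interv (fun n => - Gn mu (lZ d2) n) 0 mu) as [z [Hz1 Hz2]].
  - intros x _. apply continuity_pt_of. unfold Gn. cont_tac.
    apply continuity_pt_filterlim, (rf_cont f1 f1' g1 D Hf1).
  - exact Hmu.
  - unfold Gn. rewrite H0. nra.
  - unfold Gn. nra.
  - assert (Hz : 0 < z < mu).
    { unfold Gn in Hz2.
      assert (z <> 0) by (intros ->; rewrite H0 in Hz2; nra).
      assert (z <> mu) by (intros ->; nra).
      lra. }
    assert (Hex : exists n, 0 < n < mu /\ (mu - n) * D - lam f2 g2 d2 * f1 n = 0)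
      by (exists z; split; [auto|unfold Gn in Hz2; fold (lZ d2); lra]).
    exact (epsilon_spec (inhabits 0) _ Hex).
Qed.

(* N is jointly continuous in (mu, d2): it is the zero of a decreasing family. *)
Lemma N_cont mu d1 d2 : adm mu d2 -> cont3 (fun mu _ d2 => Nf mu d2) mu d1 d2.
Proof.
  intros [Hmu [Hd2 Ha2]].
  apply (decreasing_zero_continuous (fun p n => Gn (fst (fst p)) (lZ (snd p)) n)
           (uncurry3 (fun mu _ d2 => Nf mu d2)) (mu, d1, d2) 0).
  - apply (N_spec mu d2 Hmu (lZ_pos d2 Hd2 Ha2)).
  - intros x. unfold Gn. cont_tac; try apply cont_p1.
    apply (cont_comp lZ (fun p => snd p)); [apply cont_p3|apply lZ_cont; auto].
  - assert (Hr : 0 < Rmin mu (Rmin d2 (eta2 - Rabs (d2 - D))))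
      by (repeat apply Rmin_pos; lra).
    apply (locally3 _ _ _ _ _ Hr). intros a b c Ha _ Hc.
    set (r := Rmin mu (Rmin d2 (eta2 - Rabs (d2 - D)))) in *.
    assert (r <= mu /\ r <= d2 /\ r <= eta2 - Rabs (d2 - D)) as [R1 [R2 R3]].
    { unfold r. pose proof (Rmin_l mu (Rmin d2 (eta2 - Rabs (d2 - D)))).
      pose proof (Rmin_r mu (Rmin d2 (eta2 - Rabs (d2 - D)))).
      pose proof (Rmin_l d2 (eta2 - Rabs (d2 - D))). pose proof (Rmin_r d2 (eta2 - Rabs (d2 - D))).
      lra. }
    pose proof (Rabs_triang (c - d2) (d2 - D)) as Htri.
    replace (c - d2 + (d2 - D)) with (c - D) in Htri by ring.
    apply Rabs_def2 in Ha. pose proof (Rabs_def2 _ _ Hc).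
    assert (Hl : 0 < lZ c) by (apply lZ_pos; lra).
    destruct (N_spec a c ltac:(lra) Hl) as [HN HG]. unfold uncurry3; simpl.
    repeat split; [lra|exact HG|]. intros. apply Gn_decr; auto.
Qed.

Definition dq (y y' : R) : R := if Req_EM_T y y' then f1' y else (f1 y - f1 y') / (y - y').

Lemma Gn_diff mu l y y' : Gn mu l y - Gn mu l y' = (y - y') * (- D - l * dq y y').
Proof.
  unfold Gn, dq. destruct (Req_EM_T y y') as [->|E]; [ring|]. field. lra.
Qed.

(* dq is continuous at the diagonal point (y0, y0), by the mean value theorem. *)
Lemma dq_cont y0 : forall eps, 0 < eps -> exists d, 0 < d /\ forall y y',
  Rabs (y - y0) < d -> Rabs (y' - y0) < d -> Rabs (dq y y' - f1' y0) < eps.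
Proof.
  intros eps Heps.
  destruct (continuity_pt_eps f1' y0 (rf_cont' f1 f1' g1 D Hf1 y0) eps Heps) as [d [Hd Hf]].
  exists d. split; [auto|]. intros y y' Hy Hy'. apply Rabs_def2 in Hy, Hy'.
  unfold dq. destruct (Req_EM_T y y') as [E|E]; [apply Hf, Rabs_def1; lra|].
  assert (Hmvt : forall a b, a < b -> Rabs (a - y0) < d -> Rabs (b - y0) < d ->
                   Rabs ((f1 b - f1 a) / (b - a) - f1' y0) < eps).
  { intros a b Hab Ha Hb. apply Rabs_def2 in Ha, Hb.
    destruct (MVT_cor2 f1 f1' a b Hab) as [c [Hc1 Hc2]]; [intros; apply (rf_der f1 f1' g1 D Hf1)|].
    replace ((f1 b - f1 a) / (b - a)) with (f1' c) by (rewrite Hc1; field; lra).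
    apply Hf, Rabs_def1; lra. }
  destruct (Rlt_or_le y y') as [Hlt|Hle].
  - replace ((f1 y - f1 y') / (y - y')) with ((f1 y' - f1 y) / (y' - y)) by (field; lra).
    apply Hmvt; auto; apply Rabs_def1; lra.
  - apply Hmvt; [lra| |]; apply Rabs_def1; lra.
Qed.

(* dN/dmu, obtained by implicit differentiation of Gn(mu, l, N) = 0. *)
Definition Nd (mu d2 : R) : R := D / (D + lZ d2 * f1' (Nf mu d2)).

Lemma N_der mu d2 : adm mu d2 -> derivable_pt_lim (fun t => Nf t d2) mu (Nd mu d2).
Proof.
  intros Hadm. destruct Hadm as [Hmu [Hd2 Ha2]] eqn:Hadm'.
  pose proof (lZ_pos d2 Hd2 Ha2) as Hl. destruct (N_spec mu d2 Hmu Hl) as [Hn _].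
  pose proof (rf_pos f1 f1' g1 D Hf1 (Nf mu d2) ltac:(lra)) as Hv.
  assert (Hdiag : dq (Nf mu d2) (Nf mu d2) = f1' (Nf mu d2))
    by (unfold dq; destruct (Req_EM_T _ _); [reflexivity|congruence]).
  replace (Nd mu d2) with (- D / (- D - lZ d2 * dq (Nf mu d2) (Nf mu d2)))
    by (rewrite Hdiag; unfold Nd; field; nra).
  apply (implicit_derivative (fun t => Nf t d2) (fun t n => Gn t (lZ d2) n)
           (fun t y y' => - D - lZ d2 * dq y y')).
  - apply (locally_R _ _ _ Hmu). intros t Ht. apply Rabs_def2 in Ht.
    apply (N_spec t d2); [lra|auto].
  - intros. apply Gn_diff.
  - unfold Gn. apply is_derive_Reals. auto_derive; [auto|ring].
  - pose proof (cont3_slice _ _ _ _ (N_cont mu 0 d2 Hadm)) as CN. cbn beta in CN.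
    apply (proj2 (filterlim_locally _ _)). intros eps.
    assert (Hel : 0 < eps / lZ d2) by (apply Rdiv_lt_0_compat; [apply cond_pos|auto]).
    destruct (dq_cont (Nf mu d2) _ Hel) as [d [Hd Hdq]].
    eapply filter_imp; [|exact (continuous_near _ _ CN (mkposreal d Hd))].
    intros t Ht. simpl in Ht. apply ball_R. rewrite Hdiag.
    specialize (Hdq (Nf t d2) (Nf mu d2) Ht ltac:(rewrite Rminus_diag, Rabs_R0; auto)).
    replace (- D - lZ d2 * dq (Nf t d2) (Nf mu d2) - (- D - lZ d2 * f1' (Nf mu d2)))
      with (- (lZ d2 * (dq (Nf t d2) (Nf mu d2) - f1' (Nf mu d2)))) by ring.
    rewrite Rabs_Ropp, Rabs_mult, (Rabs_right (lZ d2)) by lra.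
    apply Rmult_lt_reg_l with (/ lZ d2); [apply Rinv_0_lt_compat; auto|].
    rewrite <- Rmult_assoc, Rinv_l, Rmult_1_l by lra. rewrite Rmult_comm. exact Hdq.
  - rewrite Hdiag. nra.
Qed.

(* The Jacobian at (N, l, Z) with Z given by the equilibrium relation, as a function
   of u = f1(N) and v = f1'(N) only; at E2 it is evaluated at u = f1(N), v = f1'(N). *)
Definition jacUV (l d1 d2 u v : R) : nat -> nat -> R :=
  jac (fun _ => u) (fun _ => v) f2 f2' g1 g2 D d1 d2 0 l (g2 / d2 * l * (g1 * u - d1)).

Definition coef (cp : (nat -> nat -> R) -> R) (mu d1 d2 : R) : R :=
  cp (jacE2 f1 f1' f2 f2' g1 g2 D mu d1 d2).
Definition coefUV (cp : (nat -> nat -> R) -> R) (l d1 d2 u v : R) : R := cp (jacUV l d1 d2 u v).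

Lemma coef_UV cp mu d1 d2 :
  coef cp mu d1 d2 = coefUV cp (lZ d2) d1 d2 (f1 (Nf mu d2)) (f1' (Nf mu d2)).
Proof. reflexivity. Qed.

Lemma coefUV_biaffine l d1 d2 :
  biaffine (coefUV cp2 l d1 d2) /\ biaffine (coefUV cp1 l d1 d2) /\ biaffine (coefUV cp0 l d1 d2).
Proof.
  unfold biaffine, dU, dV, coefUV, jacUV, jac, cp2, cp1, cp0, det3. simpl.
  repeat split; intros; ring.
Qed.

(* mu-derivative of coef cp: chain rule through u = f1(N), v = f1'(N) and N(mu). *)
Definition coef_rate (cp : (nat -> nat -> R) -> R) (mu d1 d2 : R) : R :=
  (dU (coefUV cp (lZ d2) d1 d2) (f1 (Nf mu d2)) (f1' (Nf mu d2)) * f1' (Nf mu d2) +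
   dV (coefUV cp (lZ d2) d1 d2) (f1 (Nf mu d2)) (f1' (Nf mu d2)) * f1'' (Nf mu d2)) * Nd mu d2.

Lemma coef_der cp mu d1 d2 : biaffine (coefUV cp (lZ d2) d1 d2) -> adm mu d2 ->
  derivable_pt_lim (fun t => coef cp t d1 d2) mu (coef_rate cp mu d1 d2).
Proof.
  intros Hb Hadm.
  apply (derivable_pt_lim_comp (fun t => Nf t d2)
           (fun n => coefUV cp (lZ d2) d1 d2 (f1 n) (f1' n))).
  - apply N_der; auto.
  - apply biaffine_der; auto. apply (rf_der f1 f1' g1 D Hf1).
Qed.

Lemma coefs_der mu d1 d2 : adm mu d2 ->
  derivable_pt_lim (fun t => coef cp2 t d1 d2) mu (coef_rate cp2 mu d1 d2) /\
  derivable_pt_lim (fun t => coef cp1 t d1 d2) mu (coef_rate cp1 mu d1 d2) /\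
  derivable_pt_lim (fun t => coef cp0 t d1 d2) mu (coef_rate cp0 mu d1 d2).
Proof.
  intros Hadm. destruct (coefUV_biaffine (lZ d2) d1 d2) as [B2 [B1 B0]].
  repeat split; apply coef_der; auto.
Qed.

Lemma lZ_cont_adm mu d2 : adm mu d2 -> continuity_pt lZ d2.
Proof. intros [_ [Hd Ha]]. apply lZ_cont; auto. Qed.

Ltac atom_tac := repeat match goal with
 | |- continuous (fun p => ?h (Nf (fst (fst p)) (snd p))) _ =>
     apply (cont_comp h (fun p => Nf (fst (fst p)) (snd p))); [apply N_cont; assumption|]
 | |- continuous (fun p => Nf (fst (fst p)) (snd p)) _ => apply N_cont; assumption
 | |- continuous (fun p => ?h (lZ (snd p))) _ => apply (cont_comp h (fun p => lZ (snd p)))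
 | |- continuous (fun p => lZ (snd p)) _ =>
     apply (cont_comp lZ (fun p => snd p)); [apply cont_p3|eapply lZ_cont_adm; eassumption]
 | |- continuity_pt f1 _ => apply (rf_cont f1 f1' g1 D Hf1)
 | |- continuity_pt f1' _ => apply (rf_cont' f1 f1' g1 D Hf1)
 | |- continuity_pt f1'' _ => apply Hf1c
 | |- continuity_pt f2 _ => apply (rf_cont f2 f2' g2 D Hf2)
 | |- continuity_pt f2' _ => apply (rf_cont' f2 f2' g2 D Hf2)
 end.

Lemma coefs_cont mu d1 d2 : adm mu d2 ->
  cont3 (coef cp2) mu d1 d2 /\ cont3 (coef cp1) mu d1 d2 /\ cont3 (coef cp0) mu d1 d2.
Proof.
  intros Hadm.
  change (coef ?cp) with (fun mu d1 d2 => coefUV cp (lZ d2) d1 d2 (f1 (Nf mu d2)) (f1' (Nf mu d2))).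
  unfold coefUV, jacUV, jac, cp2, cp1, cp0, det3. simpl.
  repeat split; cont3_tac; atom_tac; cbn; pose proof Hadm; unfold adm in *; lra.
Qed.

Lemma coef_rates_cont mu d1 d2 : adm mu d2 ->
  cont3 (coef_rate cp2) mu d1 d2 /\ cont3 (coef_rate cp1) mu d1 d2 /\
  cont3 (coef_rate cp0) mu d1 d2.
Proof.
  intros Hadm. pose proof Hadm as [Hmu [Hd2 Ha2]].
  pose proof (lZ_pos d2 Hd2 Ha2) as Hl. destruct (N_spec mu d2 Hmu Hl) as [Hn _].
  pose proof (rf_pos f1 f1' g1 D Hf1 (Nf mu d2) ltac:(lra)) as Hv.
  unfold coef_rate, Nd, dU, dV, coefUV, jacUV, jac, cp2, cp1, cp0, det3. simpl.
  repeat split; cont3_tac; atom_tac; cbn; nra.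
Qed.

Lemma adm_base mu : 0 < mu -> adm mu D.
Proof. intros. repeat split; auto. rewrite Rminus_diag, Rabs_R0. exact Heta2. Qed.

Lemma washout_root mu : cub (coef cp2 mu D D) (coef cp1 mu D D) (coef cp0 mu D D) (- D) = 0.
Proof. unfold coef. rewrite <- charpoly_cub. apply washout_eigenvalue; auto. Qed.

Lemma lZ_base : 0 < lZ D /\ f2 (lZ D) = D / g2.
Proof. apply Hlam2; auto. rewrite Rminus_diag, Rabs_R0. exact Heta2. Qed.

Lemma mu_c1_pos : 0 < lam f1 g1 D -> 0 < mu_c1 f1 f2 g1 g2 D D D.
Proof.
  intros Hp1. destruct lZ_base as [Hl _]. unfold mu_c1. fold (lZ D).
  assert (0 < D * lZ D / (D * g1)) by (apply Rdiv_lt_0_compat; nra). lra.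
Qed.

Section BasePoint.
Variable muc2 : R.
Hypotheses (Hmu : 0 < muc2) (Hcond : D / (g2 * lZ D) > f2' (lZ D))
  (HA : Afun f1 f1' f2 f2' g1 g2 D muc2 = 0).

(* Since -D is a root for every mu, the mu-derivative of cub(-D) vanishes. *)
Lemma washout_root_rate :
  coef_rate cp2 muc2 D D * (- D) ^ 2 + coef_rate cp1 muc2 D D * (- D) + coef_rate cp0 muc2 D D = 0.
Proof.
  destruct (coefs_der muc2 D D (adm_base muc2 Hmu)) as [H2 [H1 H0]].
  pose proof (cub_der _ _ _ muc2 _ _ _ (- D) H2 H1 H0) as H.
  assert (Hc : (fun t => cub (coef cp2 t D D) (coef cp1 t D D) (coef cp0 t D D) (- D)) = fun _ => 0)
    by (extensionality t; apply washout_root).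
  cbv beta in H. rewrite Hc in H. symmetry. exact (uniqueness_limite _ _ _ _ (derivable_pt_lim_const 0 muc2) H).
Qed.

(* D - f2'(l) g2 l > 0 is the assumption D / (g2 l) > f2'(l). *)
Lemma cond_pos : 0 < D - f2' (lZ D) * (g2 * lZ D).
Proof.
  destruct lZ_base as [Hl _].
  replace (D - f2' (lZ D) * (g2 * lZ D)) with ((g2 * lZ D) * (D / (g2 * lZ D) - f2' (lZ D)))
    by (field; nra).
  apply Rmult_lt_0_compat; nra.
Qed.

(* A(mu_c2) = 0 expresses the net growth g1 f1(n) - D of phytoplankton through f1'(n). *)
Lemma hopf_relation :
  g1 * f1 (Nf muc2 D) - D = f1' (Nf muc2 D) * D / (g2 * (D / (g2 * lZ D) - f2' (lZ D))).
Proof.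
  destruct lZ_base as [Hl _].
  unfold Afun, Zstar in HA. fold (lZ D) (Nf muc2 D) in HA.
  set (c := D / (g2 * lZ D) - f2' (lZ D)) in *.
  assert (Hc : 0 < c) by (unfold c; lra). clearbody c.
  apply Rmult_eq_reg_l with (g2 / D * lZ D * c).
  - replace (g2 / D * lZ D * c * (f1' (Nf muc2 D) * D / (g2 * c))) with (lZ D * f1' (Nf muc2 D))
      by (field; lra).
    lra.
  - apply Rgt_not_eq. apply Rmult_lt_0_compat; [|auto]. apply Rmult_lt_0_compat; [|auto].
    apply Rdiv_lt_0_compat; auto.
Qed.

(* At mu_c2 the characteristic polynomial is (x + D)(x^2 + k1) with k1 > 0: the trace
   condition A(mu_c2) = 0 gives k2 = D, and k1 = Z f2'(l) (l f1'(n) + D). *)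
Lemma base_coefs : coef cp2 muc2 D D = D /\
  coef cp1 muc2 D D = g2 / D * lZ D * (g1 * f1 (Nf muc2 D) - D) * f2' (lZ D) *
                      (lZ D * f1' (Nf muc2 D) + D).
Proof.
  destruct lZ_base as [Hl Hs]. pose proof hopf_relation as Hu. pose proof cond_pos as Hc1.
  set (c := D / (g2 * lZ D) - f2' (lZ D)) in *.
  assert (Hc : 0 < c) by (unfold c; lra).
  assert (Hf1n : f1 (Nf muc2 D) = (D + f1' (Nf muc2 D) * D / (g2 * c)) / g1)
    by (apply (Rmult_eq_reg_l g1); [rewrite <- Hu; field|]; lra).
  rewrite !coef_UV. unfold coefUV, jacUV, jac, cp2, cp1. simpl.
  rewrite Hs, Hf1n. unfold c. split; field; repeat split; lra.
Qed.

(* k1 > 0 at mu_c2: by the Hopf relation Z(mu_c2, D, D) > 0. *)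
Lemma base_k1_pos : 0 < coef cp1 muc2 D D.
Proof.
  destruct base_coefs as [_ ->]. destruct lZ_base as [Hl _].
  destruct (N_spec muc2 D Hmu Hl) as [Hn _].
  pose proof (rf_pos f1 f1' g1 D Hf1 (Nf muc2 D) ltac:(lra)) as Hv.
  pose proof (rf_pos f2 f2' g2 D Hf2 (lZ D) ltac:(lra)) as Hw.
  rewrite hopf_relation.
  assert (0 < D / (g2 * lZ D) - f2' (lZ D)) by lra.
  assert (0 < f1' (Nf muc2 D) * D / (g2 * (D / (g2 * lZ D) - f2' (lZ D))))
    by (apply Rdiv_lt_0_compat; nra).
  assert (0 < g2 / D) by (apply Rdiv_lt_0_compat; lra).
  assert (0 < lZ D * f1' (Nf muc2 D) + D) by nra.
  repeat first [assumption | apply Rmult_lt_0_compat].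
Qed.

Lemma base_rate2_neg : f1'' (Nf muc2 D) < 0 -> coef_rate cp2 muc2 D D < 0.
Proof.
  intros Hw. destruct lZ_base as [Hl _]. pose proof cond_pos as Hc1.
  destruct (N_spec muc2 D Hmu Hl) as [Hn _].
  pose proof (rf_pos f1 f1' g1 D Hf1 (Nf muc2 D) ltac:(lra)) as Hv.
  assert (HNd : 0 < Nd muc2 D) by (unfold Nd; apply Rdiv_lt_0_compat; nra).
  set (u := f1 (Nf muc2 D)) in *. set (v := f1' (Nf muc2 D)) in *.
  assert (HdU : dU (coefUV cp2 (lZ D) D D) u v = - (g1 / D) * (D - f2' (lZ D) * (g2 * lZ D)))
    by (unfold dU, coefUV, jacUV, jac, cp2; simpl; field; lra).
  assert (HdV : dV (coefUV cp2 (lZ D) D D) u v = lZ D)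
    by (unfold dV, coefUV, jacUV, jac, cp2; simpl; ring).
  unfold coef_rate. fold u v. rewrite HdU, HdV.
  assert (0 < g1 / D * (D - f2' (lZ D) * (g2 * lZ D)))
    by (apply Rmult_lt_0_compat; [apply Rdiv_lt_0_compat|]; lra).
  assert (lZ D * f1'' (Nf muc2 D) < 0) by nra.
  assert (- (g1 / D) * (D - f2' (lZ D) * (g2 * lZ D)) * v < 0) by nra.
  nra.
Qed.
End BasePoint.

Definition InBox (muc2 e mu d1 d2 : R) : Prop :=
  Rabs (mu - muc2) < e /\ Rabs (d1 - D) < e /\ Rabs (d2 - D) < e.

Lemma InBox_open muc2 e mu d1 d2 : InBox muc2 e mu d1 d2 ->
  locally (mu, d1, d2) (fun p => InBox muc2 e (fst (fst p)) (snd (fst p)) (snd p)).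
Proof.
  intros [H1 [H2 H3]].
  set (r := Rmin (e - Rabs (mu - muc2)) (Rmin (e - Rabs (d1 - D)) (e - Rabs (d2 - D)))).
  assert (Hr : 0 < r) by (repeat apply Rmin_pos; lra).
  assert (r <= e - Rabs (mu - muc2) /\ r <= e - Rabs (d1 - D) /\ r <= e - Rabs (d2 - D))
    as [R1 [R2 R3]].
  { unfold r. pose proof (Rmin_l (e - Rabs (mu - muc2)) (Rmin (e - Rabs (d1 - D)) (e - Rabs (d2 - D)))).
    pose proof (Rmin_r (e - Rabs (mu - muc2)) (Rmin (e - Rabs (d1 - D)) (e - Rabs (d2 - D)))).
    pose proof (Rmin_l (e - Rabs (d1 - D)) (e - Rabs (d2 - D))).
    pose proof (Rmin_r (e - Rabs (d1 - D)) (e - Rabs (d2 - D))). lra. }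
  apply (locally3 _ _ _ _ _ Hr). intros a b c Ha Hb Hc. simpl.
  pose proof (Rabs_triang (a - mu) (mu - muc2)). pose proof (Rabs_triang (b - d1) (d1 - D)).
  pose proof (Rabs_triang (c - d2) (d2 - D)).
  replace (a - mu + (mu - muc2)) with (a - muc2) in * by ring.
  replace (b - d1 + (d1 - D)) with (b - D) in * by ring.
  replace (c - d2 + (d2 - D)) with (c - D) in * by ring.
  repeat split; lra.
Qed.

Definition spectral_ok (eps kap mu d1 d2 : R) : Prop :=
  adm mu d2 /\ mu > mu_c1 f1 f2 g1 g2 D d1 d2 /\
  (exists r, - D - eps <= r <= - D + eps /\
             cub (coef cp2 mu d1 d2) (coef cp1 mu d1 d2) (coef cp0 mu d1 d2) r = 0) /\
  (forall x y, - D - eps <= x <= - D + eps -> - D - eps <= y <= - D + eps ->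
     kap <= Qf (coef cp2 mu d1 d2) (coef cp1 mu d1 d2) x y) /\
  (forall x, - D - eps <= x <= - D + eps ->
     x < 0 /\ 0 < disc (coef cp2 mu d1 d2) (coef cp1 mu d1 d2) x).

Lemma mu_c1_cont mu : continuity_pt (lam f1 g1) D ->
  cont3 (fun mu d1 d2 => mu - mu_c1 f1 f2 g1 g2 D d1 d2) mu D D.
Proof.
  intros Hl1. unfold mu_c1. cont3_tac.
  - apply (cont_comp (lam f1 g1) (fun p => snd (fst p))); [apply cont_p2|exact Hl1].
  - apply (cont_comp (lam f2 g2) snd); [apply cont_p3|].
    apply lZ_cont; [auto|rewrite Rminus_diag, Rabs_R0; exact Heta2].
  - cbn. nra.
Qed.

(* The base point is spectrally nondegenerate, so the picture holds on a whole box. *)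
Lemma spectral_box muc2 : 0 < muc2 -> D / (g2 * lZ D) > f2' (lZ D) ->
  Afun f1 f1' f2 f2' g1 g2 D muc2 = 0 -> muc2 > mu_c1 f1 f2 g1 g2 D D D ->
  continuity_pt (lam f1 g1) D ->
  exists e eps kap, 0 < e /\ 0 < eps /\ 0 < kap /\
    forall mu d1 d2, InBox muc2 e mu d1 d2 -> spectral_ok eps kap mu d1 d2.
Proof.
  intros Hmu Hc HA Hmc Hl1.
  destruct (coefs_cont muc2 D D (adm_base muc2 Hmu)) as [C2 [C1 C0]].
  destruct (base_coefs muc2 Hc HA) as [Ek2 _]. pose proof (base_k1_pos muc2 Hmu Hc HA).
  destruct (cubic_simple_root_persists (uncurry3 (coef cp2)) (uncurry3 (coef cp1))
              (uncurry3 (coef cp0)) (muc2, D, D) (- D) C2 C1 C0) as [eps [kap [Heps [Hkap Hloc]]]];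
    unfold uncurry3; simpl; [apply washout_root|unfold Qf; nra|unfold disc; nra|lra|].
  assert (Hmc0 : 0 < muc2 - mu_c1 f1 f2 g1 g2 D D D) by lra.
  pose proof (continuous_near _ _ (mu_c1_cont muc2 Hl1) (mkposreal _ Hmc0)) as Hnear.
  destruct (locally3_cube _ _ _ _ (filter_and _ _ Hloc Hnear)) as [e1 [He1 Hcube]].
  set (e := Rmin e1 (Rmin (muc2 / 2) (Rmin (eta2 / 2) (D / 2)))).
  assert (e <= e1 /\ e <= muc2 / 2 /\ e <= eta2 / 2 /\ e <= D / 2) as [L1 [L2 [L3 L4]]].
  { unfold e. pose proof (Rmin_l e1 (Rmin (muc2 / 2) (Rmin (eta2 / 2) (D / 2)))).
    pose proof (Rmin_r e1 (Rmin (muc2 / 2) (Rmin (eta2 / 2) (D / 2)))).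
    pose proof (Rmin_l (muc2 / 2) (Rmin (eta2 / 2) (D / 2))).
    pose proof (Rmin_r (muc2 / 2) (Rmin (eta2 / 2) (D / 2))).
    pose proof (Rmin_l (eta2 / 2) (D / 2)). pose proof (Rmin_r (eta2 / 2) (D / 2)). lra. }
  assert (He : 0 < e) by (repeat apply Rmin_pos; lra).
  exists e, eps, kap. split; [|split; [|split]]; auto.
  intros mu d1 d2 [Hm [Hd1 Hd2]].
  destruct (Hcube mu d1 d2 ltac:(lra) ltac:(lra) ltac:(lra)) as [[Hr [HQ Hx]] Hgap].
  unfold uncurry3 in *; simpl in *. apply Rabs_def2 in Hm, Hd2, Hgap.
  split; [repeat split; try lra; apply Rabs_def1; lra|].
  split; [lra|]. split; [exact Hr|split; [exact HQ|exact Hx]].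
Qed.

Section Spectral.
Variables (muc2 e eps kap : R).
Hypotheses (Hmu : 0 < muc2) (Hcond : D / (g2 * lZ D) > f2' (lZ D))
  (HA : Afun f1 f1' f2 f2' g1 g2 D muc2 = 0).
Hypotheses (He : 0 < e) (Heps : 0 < eps) (Hkap : 0 < kap)
  (Hbox : forall mu d1 d2, InBox muc2 e mu d1 d2 -> spectral_ok eps kap mu d1 d2).

Definition eig_r : R -> R -> R -> R := root (coef cp2) (coef cp1) (coef cp0) (- D) eps.
Definition eig_a : R -> R -> R -> R := re_part (coef cp2) (coef cp1) (coef cp0) (- D) eps.
Definition eig_w (mu d1 d2 : R) : R :=
  sqrt (disc (coef cp2 mu d1 d2) (coef cp1 mu d1 d2) (eig_r mu d1 d2) / 4).
Definition eig_a' : R -> R -> R -> R :=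
  re_rate (coef cp2) (coef cp1) (coef cp0) (coef_rate cp2) (coef_rate cp1) (coef_rate cp0) (- D) eps.

(* The hypotheses of the CubicRoot section, for B = InBox muc2 e. *)
Lemma box_adm mu d1 d2 : InBox muc2 e mu d1 d2 -> adm mu d2.
Proof. intros HB. apply (Hbox _ _ _ HB). Qed.

Lemma box_k_cont mu d1 d2 : InBox muc2 e mu d1 d2 ->
  cont3 (coef cp2) mu d1 d2 /\ cont3 (coef cp1) mu d1 d2 /\ cont3 (coef cp0) mu d1 d2.
Proof. intros HB. apply coefs_cont, (box_adm _ _ _ HB). Qed.

Lemma box_kd_cont mu d1 d2 : InBox muc2 e mu d1 d2 ->
  cont3 (coef_rate cp2) mu d1 d2 /\ cont3 (coef_rate cp1) mu d1 d2 /\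
  cont3 (coef_rate cp0) mu d1 d2.
Proof. intros HB. apply coef_rates_cont, (box_adm _ _ _ HB). Qed.

Lemma box_k_der mu d1 d2 : InBox muc2 e mu d1 d2 ->
  derivable_pt_lim (fun t => coef cp2 t d1 d2) mu (coef_rate cp2 mu d1 d2) /\
  derivable_pt_lim (fun t => coef cp1 t d1 d2) mu (coef_rate cp1 mu d1 d2) /\
  derivable_pt_lim (fun t => coef cp0 t d1 d2) mu (coef_rate cp0 mu d1 d2).
Proof. intros HB. apply coefs_der, (box_adm _ _ _ HB). Qed.

Lemma box_root mu d1 d2 : InBox muc2 e mu d1 d2 -> exists r, - D - eps <= r <= - D + eps /\
  cub (coef cp2 mu d1 d2) (coef cp1 mu d1 d2) (coef cp0 mu d1 d2) r = 0.
Proof. intros HB. apply (Hbox _ _ _ HB). Qed.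

Lemma box_Q mu d1 d2 : InBox muc2 e mu d1 d2 ->
  forall x y, - D - eps <= x <= - D + eps -> - D - eps <= y <= - D + eps ->
  kap <= Qf (coef cp2 mu d1 d2) (coef cp1 mu d1 d2) x y.
Proof. intros HB. apply (Hbox _ _ _ HB). Qed.

#[local] Hint Resolve InBox_open box_k_cont box_kd_cont box_k_der box_root box_Q : box.

Lemma eig_a_der mu d1 d2 : InBox muc2 e mu d1 d2 ->
  derivable_pt_lim (fun t => eig_a t d1 d2) mu (eig_a' mu d1 d2).
Proof. intros HB. eapply re_part_der; eauto with box. Qed.

Lemma eig_a_cont mu d1 d2 : InBox muc2 e mu d1 d2 -> cont3 eig_a mu d1 d2.
Proof. intros HB. eapply re_part_cont; eauto with box. Qed.

Lemma eig_a'_cont mu d1 d2 : InBox muc2 e mu d1 d2 -> cont3 eig_a' mu d1 d2.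
Proof. intros HB. eapply re_rate_cont; eauto with box. Qed.

Lemma eig_point mu d1 d2 : InBox muc2 e mu d1 d2 ->
  mu > mu_c1 f1 f2 g1 g2 D d1 d2 /\
  eig_split (jacE2 f1 f1' f2 f2' g1 g2 D mu d1 d2) (eig_r mu d1 d2) (eig_a mu d1 d2) (eig_w mu d1 d2) /\
  eig_r mu d1 d2 < 0 /\ eig_w mu d1 d2 <> 0.
Proof.
  intros HB. destruct (root_spec _ _ _ _ _ _ box_root mu d1 d2 HB) as [Hr Hc].
  destruct (Hbox _ _ _ HB) as [_ [Hmc [_ [_ Hx]]]]. destruct (Hx _ Hr) as [Hneg Hdisc].
  split; [exact Hmc|split; [|split; [exact Hneg|]]].
  - intro x. rewrite charpoly_cub. apply cub_factor; [exact Hc|left; exact Hdisc].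
  - unfold eig_w. apply Rgt_not_eq, sqrt_lt_R0, Rdiv_lt_0_compat; [exact Hdisc|lra].
Qed.

Lemma part1_on_box delta D1 D2 : delta < e -> Rabs (D1 - D) < e -> Rabs (D2 - D) < e ->
  prop1 f1 f1' f2 f2' g1 g2 D D1 D2 muc2 delta
        (fun mu => eig_r mu D1 D2) (fun mu => eig_a mu D1 D2) (fun mu => eig_w mu D1 D2).
Proof.
  intros Hde H1 H2 mu Hm. apply eig_point.
  repeat split; auto. apply Rabs_def1; lra.
Qed.

Lemma eig_r_base mu : InBox muc2 e mu D D -> eig_r mu D D = - D.
Proof.
  intros HB. symmetry. apply (root_unique _ _ _ _ _ _ kap Hkap box_root box_Q mu D D); auto; [lra|].
  apply washout_root.
Qed.

Lemma box_center : InBox muc2 e muc2 D D.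
Proof. unfold InBox. rewrite !Rminus_diag, !Rabs_R0. auto. Qed.

Lemma eig_a_base : eig_a muc2 D D = 0.
Proof.
  unfold eig_a, re_part. fold (eig_r muc2 D D). rewrite (eig_r_base muc2 box_center).
  destruct (base_coefs muc2 Hcond HA) as [-> _]. field.
Qed.

(* Since r = -D for all mu when D1 = D2 = D, a' = -k2'/2 there, positive if f1''(n) < 0. *)
Lemma eig_a'_base_pos : f1'' (Nf muc2 D) < 0 -> 0 < eig_a' muc2 D D.
Proof.
  intros Hw. unfold eig_a', re_rate, root_rate. fold (eig_r muc2 D D).
  rewrite (eig_r_base muc2 box_center), (washout_root_rate muc2 Hmu).
  pose proof (base_rate2_neg muc2 Hmu Hcond Hw). unfold Rdiv. rewrite Ropp_0, Rmult_0_l. lra.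
Qed.

Lemma eig_a'_pos_box : f1'' (Nf muc2 D) < 0 -> exists E, 0 < E /\ E <= e /\
  forall mu d1 d2, InBox muc2 E mu d1 d2 -> InBox muc2 e mu d1 d2 /\ 0 < eig_a' mu d1 d2.
Proof.
  intros Hw. pose proof (eig_a'_base_pos Hw) as Hpos.
  destruct (cont3_eps _ _ _ _ (eig_a'_cont _ _ _ box_center) _ (ltac:(lra) : 0 < eig_a' muc2 D D / 2))
    as [d [Hd Hnear]].
  exists (Rmin e d). pose proof (Rmin_l e d). pose proof (Rmin_r e d).
  split; [apply Rmin_pos; auto|split; [auto|]].
  intros mu d1 d2 [H1 [H2 H3]]. split; [repeat split; lra|].
  specialize (Hnear mu d1 d2 ltac:(lra) ltac:(lra) ltac:(lra)). apply Rabs_def2 in Hnear. lra.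
Qed.
Lemma eig_a_sign_change E : 0 < E ->
  (forall mu d1 d2, InBox muc2 E mu d1 d2 -> InBox muc2 e mu d1 d2 /\ 0 < eig_a' mu d1 d2) ->
  exists rho, 0 < rho /\ forall D1 D2, Rabs (D1 - D) < rho -> Rabs (D2 - D) < rho ->
    eig_a (muc2 - E / 4) D1 D2 < 0 /\ 0 < eig_a (muc2 + E / 4) D1 D2.
Proof.
  intros HE Hpos.
  assert (Hin : forall mu, Rabs (mu - muc2) < E -> InBox muc2 E mu D D)
    by (intros; unfold InBox; rewrite Rminus_diag, Rabs_R0; auto).
  destruct (increasing_sign_change (fun t => eig_a t D D) (fun t => eig_a' t D D) muc2 (E / 4))
    as [Hlo Hhi]; [lra|apply eig_a_base|..].
  { intros t Ht. assert (HB : InBox muc2 E t D D) by (apply Hin, Rabs_def1; lra).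
    destruct (Hpos _ _ _ HB) as [HBe Hp]. split; [apply eig_a_der; auto|auto]. }
  assert (Clo : cont3 eig_a (muc2 - E / 4) D D)
    by (apply eig_a_cont, Hpos, Hin, Rabs_def1; lra).
  assert (Chi : cont3 eig_a (muc2 + E / 4) D D)
    by (apply eig_a_cont, Hpos, Hin, Rabs_def1; lra).
  destruct (cont3_eps _ _ _ _ Clo _ (ltac:(lra) : 0 < - eig_a (muc2 - E / 4) D D)) as [rl [Hrl Nl]].
  destruct (cont3_eps _ _ _ _ Chi _ Hhi) as [rh [Hrh Nh]].
  exists (Rmin rl rh). split; [apply Rmin_pos; auto|]. intros D1 D2 H1 H2.
  pose proof (Rmin_l rl rh). pose proof (Rmin_r rl rh).
  specialize (Nl (muc2 - E / 4) D1 D2 ltac:(rewrite Rminus_diag, Rabs_R0; lra) ltac:(lra) ltac:(lra)).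
  specialize (Nh (muc2 + E / 4) D1 D2 ltac:(rewrite Rminus_diag, Rabs_R0; lra) ltac:(lra) ltac:(lra)).
  apply Rabs_def2 in Nl, Nh. lra.
Qed.

Lemma hopf_crossing : f1'' (Nf muc2 D) < 0 ->
  exists delta rho, 0 < delta /\ 0 < rho /\ forall D1 D2,
    Rabs (D1 - D) < rho -> Rabs (D2 - D) < rho ->
    prop1 f1 f1' f2 f2' g1 g2 D D1 D2 muc2 delta
      (fun mu => eig_r mu D1 D2) (fun mu => eig_a mu D1 D2) (fun mu => eig_w mu D1 D2) /\
    (forall mu, muc2 - delta <= mu <= muc2 + delta ->
       derivable_pt_lim (fun t => eig_a t D1 D2) mu (eig_a' mu D1 D2) /\ eig_a' mu D1 D2 > 0) /\
    exists mustar, muc2 - delta < mustar < muc2 + delta /\ eig_a mustar D1 D2 = 0.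
Proof.
  intros Hw. destruct (eig_a'_pos_box Hw) as [E [HE [HEe Hpos]]].
  destruct (eig_a_sign_change E HE Hpos) as [rho [Hrho Hsign]].
  exists (E / 2), (Rmin (E / 2) rho). pose proof (Rmin_l (E / 2) rho). pose proof (Rmin_r (E / 2) rho).
  split; [lra|split; [apply Rmin_pos; lra|]]. intros D1 D2 H1 H2.
  assert (Hder : forall mu, muc2 - E / 2 <= mu <= muc2 + E / 2 ->
            derivable_pt_lim (fun t => eig_a t D1 D2) mu (eig_a' mu D1 D2) /\ eig_a' mu D1 D2 > 0).
  { intros mu Hm. assert (HB : InBox muc2 E mu D1 D2) by (repeat split; try lra; apply Rabs_def1; lra).
    destruct (Hpos _ _ _ HB) as [HBe Hp]. split; [apply eig_a_der; auto|auto]. }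
  split; [apply part1_on_box; lra|split; [exact Hder|]].
  destruct (Hsign D1 D2 ltac:(lra) ltac:(lra)) as [Hlo Hhi].
  destruct (IVT_interv (fun t => eig_a t D1 D2) (muc2 - E / 4) (muc2 + E / 4)) as [z [Hz Hz0]].
  - intros t Ht. apply derivable_continuous_pt. exists (eig_a' t D1 D2). apply Hder. lra.
  - lra.
  - exact Hlo.
  - exact Hhi.
  - exists z. split; [lra|exact Hz0].
Qed.
End Spectral.

End Model.

Theorem theorem3p8
  (D g1 g2 : R) (f1 f1' f1'' f1''' f2 f2' f2'' : R -> R) (muc2 : R)
  (HD : 0 < D) (Hg1 : 0 < g1) (Hg2 : 0 < g2)
  (Hf1 : response_ok f1 f1' g1 D) (Hf2 : response_ok f2 f2' g2 D)
  (Hf1C3 : (forall x, derivable_pt_lim f1' x (f1'' x)) /\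
           (forall x, derivable_pt_lim f1'' x (f1''' x)) /\ continuity f1''')
  (Hf2C2 : (forall x, derivable_pt_lim f2' x (f2'' x)) /\ continuity f2'')
  (Hcond : D / (g2 * lam f2 g2 D) > f2' (lam f2 g2 D))
  (Hmuc2 : muc2 > mu_c1 f1 f2 g1 g2 D D D)
  (HA : Afun f1 f1' f2 f2' g1 g2 D muc2 = 0) :
  (exists delta rho, 0 < delta /\ 0 < rho /\
     forall D1 D2, 0 < D1 -> 0 < D2 ->
       sqrt ((D1 - D) ^ 2 + (D2 - D) ^ 2) < rho ->
       exists r a w : R -> R,
         prop1 f1 f1' f2 f2' g1 g2 D D1 D2 muc2 delta r a w)
  /\
  (f1'' (Nstar f1 f2 g2 D muc2 D) < 0 ->
   exists delta rho, 0 < delta /\ 0 < rho /\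
     forall D1 D2, 0 < D1 -> 0 < D2 ->
       sqrt ((D1 - D) ^ 2 + (D2 - D) ^ 2) < rho ->
       exists (r a w a' : R -> R),
         prop1 f1 f1' f2 f2' g1 g2 D D1 D2 muc2 delta r a w /\
         (forall mu, muc2 - delta <= mu <= muc2 + delta ->
            derivable_pt_lim a mu (a' mu) /\ a' mu > 0) /\
         exists mustar, muc2 - delta < mustar < muc2 + delta /\
           a mustar = 0 /\ w mustar <> 0 /\ r mustar < 0 /\ a' mustar > 0).
Proof.
  destruct Hf1C3 as [Hf1d [Hf1d' _]].
  assert (Hf1c : continuity f1'')
    by (intro x; apply derivable_continuous_pt; exists (f1''' x); apply Hf1d').
  destruct (lam_spec f2 f2' g2 D Hf2 Hg2) as [eta2 [Heta2 Hlam2]].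
  destruct (lam_spec f1 f1' g1 D Hf1 Hg1) as [eta1 [Heta1 Hlam1]].
  assert (HD0 : Rabs (D - D) < eta1) by (rewrite Rminus_diag, Rabs_R0; exact Heta1).
  pose proof (lam_cont f1 f1' g1 D Hf1 Hg1 eta1 Hlam1 D HD HD0) as Hl1.
  pose proof (mu_c1_pos D g1 g2 f1 f2 HD Hg1 eta2 Heta2 Hlam2 (proj1 (Hlam1 D HD HD0))).
  assert (Hmu : 0 < muc2) by lra.
  destruct (spectral_box D g1 g2 f1 f1' f2 f2' HD Hg1 Hg2 Hf1 Hf2 eta2 Heta2 Hlam2 muc2
              Hmu Hcond HA Hmuc2 Hl1) as [e [eps [kap [He [Heps [Hkap Hbox]]]]]].
  split.
  - exists (e / 2), (e / 2). split; [lra|split; [lra|]].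
    intros D1 D2 _ _ Hs. apply sqrt_bound in Hs as [H1 H2].
    do 3 eexists. apply (part1_on_box _ _ _ _ _ _ _ _ _ _ _ _ Hbox); lra.
  - intros Hw. destruct (hopf_crossing D g1 g2 f1 f1' f1'' f2 f2' HD Hg1 Hg2 Hf1 Hf2 Hf1d Hf1c
                          eta2 Heta2 Hlam2 muc2 e eps kap Hmu Hcond HA He Heps Hkap Hbox Hw)
      as [delta [rho [Hdelta [Hrho Hcross]]]].
    exists delta, rho. split; [auto|split; [auto|]].
    intros D1 D2 _ _ Hs. apply sqrt_bound in Hs as [H1 H2].
    destruct (Hcross D1 D2 H1 H2) as [Hp1 [Hder [mustar [Hms Ha0]]]].
    do 4 eexists. split; [exact Hp1|split; [exact Hder|]].
    exists mustar. destruct (Hp1 mustar ltac:(lra)) as [_ [_ [Hr Hw']]].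
    destruct (Hder mustar ltac:(lra)) as [_ Hpos]. repeat split; auto; lra.
Qed.
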